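(* Consider the following eight-dimensional real Lie algebras on a basis $X_1,\dots,X_8$, with $[X_i,X_j]=\sum_kC_{ij}^kX_k$ and only nonzero $C_{ij}^k$ with $i<j$ listed. Let (A) denote $C_{23}^1=1,C_{12}^3=1,C_{13}^2=-1,C_{14}^7=\tfrac12,C_{15}^6=\tfrac12,C_{16}^5=-\tfrac12,C_{17}^4=-\tfrac12,C_{24}^5=\tfrac12,C_{25}^4=-\tfrac12,C_{26}^7=\tfrac12,C_{27}^6=-\tfrac12,C_{34}^6=\tfrac12,C_{35}^7=-\tfrac12,C_{36}^4=-\tfrac12,C_{37}^5=\tfrac12$; (B) denote $C_{12}^2=2,C_{13}^3=-2,C_{23}^1=1,C_{14}^4=1,C_{15}^5=-1,C_{25}^4=1,C_{34}^5=1,C_{16}^6=1,C_{17}^7=-1,C_{27}^6=1,C_{36}^7=1$. $L_{8,2}$: (A) and $C_{45}^8=1,C_{67}^8=-1$. $L_{8,4}^0$: (A) and $C_{48}^6=-1,C_{58}^7=-1,C_{68}^4=1,C_{78}^5=1$. $L_{8,5}$: $C_{23}^1=1,C_{12}^3=1,C_{13}^2=-1,C_{14}^7=\tfrac12,C_{15}^6=-\tfrac12,C_{16}^5=2,C_{16}^8=-1,C_{17}^4=-2,C_{18}^6=3,C_{24}^6=\tfrac12,C_{25}^7=\tfrac12,C_{26}^4=-2,C_{27}^5=-2,C_{27}^8=-1,C_{28}^7=3,C_{34}^5=2,C_{35}^4=-2,C_{36}^7=1,C_{37}^6=-1$. $L_{8,13}^{\varepsilon}$ ($\varepsilon=\pm1$):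 (B) and $C_{45}^8=1,C_{67}^8=\varepsilon$. $L_{8,14}$: (B) and $C_{68}^4=1,C_{78}^5=1$. $L_{8,15}$: (B) and $C_{67}^8=1,C_{68}^4=1,C_{78}^5=1$. $L_{8,17}^{-1}$: (B) and $C_{48}^4=1,C_{58}^5=1,C_{68}^6=-1,C_{78}^7=-1$. $L_{8,18}^0$: (B) and $C_{48}^6=-1,C_{58}^7=-1,C_{68}^4=1,C_{78}^5=1$. $L_{8,21}$: $C_{12}^2=2,C_{13}^3=-2,C_{23}^1=1,C_{14}^4=4,C_{15}^5=2,C_{17}^7=-2,C_{18}^8=-4,C_{25}^4=4,C_{26}^5=3,C_{27}^6=2,C_{28}^7=1,C_{34}^5=1,C_{35}^6=2,C_{36}^7=3,C_{37}^8=4$. Then the indecomposable Lie algebras $L_{8,2},L_{8,4}^0,L_{8,5},L_{8,13}^{\varepsilon},L_{8,14},L_{8,15},L_{8,17}^{-1},L_{8,18}^0,L_{8,21}$ are all obtained as contractions of simple Lie algebras. More precisely: (i) $\mathfrak{su}(3)$ contracts onto $L_{8,2}$, $L_{8,4}^0$ and $L_{8,5}$; (ii) $\mathfrak{su}(2,1)$ contracts onto $L_{8,2}$, $L_{8,4}^0$, $L_{8,13}^1$, $L_{8,14}$, $L_{8,15}$, $L_{8,18}^0$ and $L_{8,21}$; (iii) $\mathfrak{sl}(3,\mathbb{R})$ contracts onto $L_{8,5}$, $L_{8,13}^{-1}$, $L_{8,14}$, $L_{8,15}$, $L_{8,17}^{-1}$ and $L_{8,21}$.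
   Context: All Lie algebras are over $\mathbb{R}$. Unlisted brackets $[X_i,X_j]$, $i<j$, are zero; the others follow by antisymmetry. Contraction: for a Lie algebra $(V,[\cdot,\cdot])$ and nonsingular linear maps $\Phi_t$, $t\in[1,\infty)$, if $[X,Y]_\infty=\lim_{t\to\infty}\Phi_t^{-1}[\Phi_tX,\Phi_tY]$ exists for all $X,Y$, any Lie algebra isomorphic to $(V,[\cdot,\cdot]_\infty)$ is a contraction of $(V,[\cdot,\cdot])$. $\mathfrak{su}(3)$, $\mathfrak{su}(2,1)$, $\mathfrak{sl}(3,\mathbb{R})$ are the real forms of the complex simple Lie algebra $\mathfrak{sl}(3,\mathbb{C})$. *)

From HB Require Import structures.
From mathcomp Require Import all_boot all_order all_algebra.
From mathcomp Require Import complex.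
From mathcomp Require Import all_classical all_reals topology normedtype.
Set Implicit Arguments. Unset Strict Implicit. Unset Printing Implicit Defensive.
Import Order.TTheory GRing.Theory Num.Theory.
Import numFieldNormedType.Exports.
Local Open Scope classical_set_scope.
Local Open Scope ring_scope.

(* The basis vector X_k of the paper is the k-th unit column, so that  *)
(* paper index k (1..8) corresponds to the ordinal k-1.                *)

Definition bracket (R : realType) := 'cV[R]_8 -> 'cV[R]_8 -> 'cV[R]_8.

(* A list of structure constants: (i, j, k, c) means C_{ij}^k = c,
   with 1-based indices and i < j; the others follow by antisymmetry
   and unlisted ones are zero. *)
Definition sc_table (R : realType) := seq (nat * nat * nat * R).

Definition sc_coef (R : realType) (l : sc_table R) (i j k : nat) : R :=
  \sum_(e <- l | (e.1.1.1 == i) && (e.1.1.2 == j) && (e.1.2 == k)) e.2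
  - \sum_(e <- l | (e.1.1.1 == j) && (e.1.1.2 == i) && (e.1.2 == k)) e.2.

Definition sc_bracket (R : realType) (l : sc_table R) : bracket R :=
  fun x y => \col_(k < 8)
    \sum_(i < 8) \sum_(j < 8) x i 0 * y j 0 * sc_coef l i.+1 j.+1 k.+1.

Definition lie_iso (R : realType) (b1 b2 : bracket R) : Prop :=
  exists P : 'M[R]_8, P \in unitmx /\
    forall x y, P *m b1 x y = b2 (P *m x) (P *m y).

(* Contraction (definition in the context): nonsingular Phi_t, t in [1,oo),
   such that [x,y]_oo = lim_{t->oo} Phi_t^{-1}[Phi_t x, Phi_t y] exists
   for all x, y (limits in R^8 taken coordinatewise), and the target is
   isomorphic to (R^8, [.,.]_oo).  Values of Phi for t < 1 are irrelevant. *)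
Definition contracts_onto (R : realType) (b target : bracket R) : Prop :=
  exists Phi : R -> 'M[R]_8,
    (forall t : R, 1 <= t -> Phi t \in unitmx) /\
    exists binf : bracket R,
      (forall (x y : 'cV[R]_8) (k : 'I_8),
         (fun t : R => (invmx (Phi t) *m b (Phi t *m x) (Phi t *m y)) k 0)
           @ +oo --> binf x y k 0) /\
      lie_iso binf target.

Definition conj_tr (R : realType) (A : 'M[R[i]]_3) : 'M[R[i]]_3 :=
  (map_mx (@conjc R) A)^T.

Definition su3 (R : realType) (A : 'M[R[i]]_3) : Prop :=
  conj_tr A = - A /\ \tr A = 0.

Definition J21 (R : realType) : 'M[R[i]]_3 :=
  \matrix_(i < 3, j < 3) (if i == j then (if val i == 2%N then -1 else 1) else 0).

Definition su21 (R : realType) (A : 'M[R[i]]_3) : Prop :=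
  conj_tr A *m J21 R + J21 R *m A = 0 /\ \tr A = 0.

Definition sl3R (R : realType) (A : 'M[R]_3) : Prop := \tr A = 0.

Definition iso_to_cmx (R : realType) (g : 'M[R[i]]_3 -> Prop) (b : bracket R) : Prop :=
  exists f : 'cV[R]_8 -> 'M[R[i]]_3,
    (forall (a : R) x y, f (a *: x + y) = ((a%:C)%C) *: f x + f y) /\
    injective f /\
    (forall x, g (f x)) /\
    (forall A, g A -> exists x, f x = A) /\
    (forall x y, f (b x y) = f x *m f y - f y *m f x).

Definition iso_to_rmx (R : realType) (g : 'M[R]_3 -> Prop) (b : bracket R) : Prop :=
  exists f : 'cV[R]_8 -> 'M[R]_3,
    (forall (a : R) x y, f (a *: x + y) = a *: f x + f y) /\
    injective f /\
    (forall x, g (f x)) /\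
    (forall A, g A -> exists x, f x = A) /\
    (forall x y, f (b x y) = f x *m f y - f y *m f x).

Definition su3_contracts_onto (R : realType) (L : bracket R) : Prop :=
  exists b : bracket R, iso_to_cmx (@su3 R) b /\ contracts_onto b L.
Definition su21_contracts_onto (R : realType) (L : bracket R) : Prop :=
  exists b : bracket R, iso_to_cmx (@su21 R) b /\ contracts_onto b L.
Definition sl3R_contracts_onto (R : realType) (L : bracket R) : Prop :=
  exists b : bracket R, iso_to_rmx (@sl3R R) b /\ contracts_onto b L.

Definition sc (R : realType) (i j k : nat) (c : R) : nat * nat * nat * R :=
  (i, j, k, c).
Arguments sc {R} i%_N j%_N k%_N c%_R.

Section Tables.
Variable R : realType.
Local Notation h := (2^-1 : R).

Definition tabA : sc_table R :=
  [:: sc 2 3 1 (1); sc 1 2 3 (1); sc 1 3 2 (-1); sc 1 4 7 (h); sc 1 5 6 (h); sc 1 6 5 (-h);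
      sc 1 7 4 (-h); sc 2 4 5 (h); sc 2 5 4 (-h); sc 2 6 7 (h); sc 2 7 6 (-h); sc 3 4 6 (h);
      sc 3 5 7 (-h); sc 3 6 4 (-h); sc 3 7 5 (h)].

Definition tabB : sc_table R :=
  [:: sc 1 2 2 (2); sc 1 3 3 (-2); sc 2 3 1 (1); sc 1 4 4 (1); sc 1 5 5 (-1); sc 2 5 4 (1);
      sc 3 4 5 (1); sc 1 6 6 (1); sc 1 7 7 (-1); sc 2 7 6 (1); sc 3 6 7 (1)].

Definition L8_2 : bracket R :=
  sc_bracket (tabA ++ [:: sc 4 5 8 (1); sc 6 7 8 (-1)]).

Definition L8_4_0 : bracket R :=
  sc_bracket (tabA ++ [:: sc 4 8 6 (-1); sc 5 8 7 (-1); sc 6 8 4 (1); sc 7 8 5 (1)]).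

Definition L8_5 : bracket R :=
  sc_bracket
    [:: sc 2 3 1 (1); sc 1 2 3 (1); sc 1 3 2 (-1); sc 1 4 7 (h); sc 1 5 6 (-h); sc 1 6 5 (2);
        sc 1 6 8 (-1); sc 1 7 4 (-2); sc 1 8 6 (3); sc 2 4 6 (h); sc 2 5 7 (h); sc 2 6 4 (-2);
        sc 2 7 5 (-2); sc 2 7 8 (-1); sc 2 8 7 (3); sc 3 4 5 (2); sc 3 5 4 (-2); sc 3 6 7 (1);
        sc 3 7 6 (-1)].

Definition L8_13 (eps : R) : bracket R :=
  sc_bracket (tabB ++ [:: sc 4 5 8 (1); sc 6 7 8 (eps)]).

Definition L8_14 : bracket R :=
  sc_bracket (tabB ++ [:: sc 6 8 4 (1); sc 7 8 5 (1)]).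

Definition L8_15 : bracket R :=
  sc_bracket (tabB ++ [:: sc 6 7 8 (1); sc 6 8 4 (1); sc 7 8 5 (1)]).

Definition L8_17_m1 : bracket R :=
  sc_bracket (tabB ++ [:: sc 4 8 4 (1); sc 5 8 5 (1); sc 6 8 6 (-1); sc 7 8 7 (-1)]).

Definition L8_18_0 : bracket R :=
  sc_bracket (tabB ++ [:: sc 4 8 6 (-1); sc 5 8 7 (-1); sc 6 8 4 (1); sc 7 8 5 (1)]).

Definition L8_21 : bracket R :=
  sc_bracket
    [:: sc 1 2 2 (2); sc 1 3 3 (-2); sc 2 3 1 (1); sc 1 4 4 (4); sc 1 5 5 (2); sc 1 7 7 (-2);
        sc 1 8 8 (-4); sc 2 5 4 (4); sc 2 6 5 (3); sc 2 7 6 (2); sc 2 8 7 (1); sc 3 4 5 (1);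
        sc 3 5 6 (2); sc 3 6 7 (3); sc 3 7 8 (4)].

End Tables.

(* Every contraction is a graded (generalized Inonu-Wigner) contraction.  After a
   rational change of basis Q of the simple algebra, with structure constants C_ab^k,
   take Phi_t = diag(t^-w_1, ..., t^-w_8) for non-negative integer weights w.  Then
   Phi_t^-1 [Phi_t X_a, Phi_t X_b] = sum_k t^(w_k - w_a - w_b) C_ab^k X_k, so the limit
   exists as soon as w_k <= w_a + w_b whenever C_ab^k <> 0, and it keeps exactly the
   constants with w_k = w_a + w_b.  An explicit rational isomorphism P identifies this
   graded algebra with the target.  Q, w, P (and the inverses of Q and P) form a
   certificate whose validity is a finite computation over Q; the three real forms are
   presented by explicit bases of 3x3 matrices whose commutators are checked over Q(i)
   and Q in the same way. *)

From HB Require Import structures.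
From mathcomp Require Import all_boot all_order all_algebra.
From mathcomp Require Import complex.
From mathcomp Require Import all_classical all_reals topology normedtype.
From mathcomp Require Import ring.
Set Implicit Arguments. Unset Strict Implicit. Unset Printing Implicit Defensive.
Import Order.TTheory GRing.Theory Num.Theory.
Import numFieldNormedType.Exports.
Local Open Scope classical_set_scope.
Local Open Scope ring_scope.

Section StructureConstants.
Variable R : realType.
Implicit Types (c : 'I_8 -> 'I_8 -> 'I_8 -> R) (M N : 'M[R]_8) (x y : 'cV[R]_8).

Definition coef_bracket c : bracket R :=
  fun x y => \col_(k < 8) \sum_(a < 8) \sum_(b < 8) x a 0 * y b 0 * c a b k.

Lemma sc_bracket_coef (l : sc_table R) :
  sc_bracket l = coef_bracket (fun a b k => sc_coef l a.+1 b.+1 k.+1).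
Proof. by []. Qed.

Lemma eq_coef_bracket c c' x y :
  (forall a b k, c a b k = c' a b k) -> coef_bracket c x y = coef_bracket c' x y.
Proof.
move=> cc'; apply/matrixP => k j.
by rewrite /coef_bracket !mxE; apply: eq_bigr => a _; apply: eq_bigr => b _; rewrite cc'.
Qed.

Lemma mul_coef_bracket M c x y :
  M *m coef_bracket c x y = coef_bracket (fun a b k => \sum_(l < 8) M k l * c a b l) x y.
Proof.
apply/matrixP => k j; rewrite /coef_bracket !mxE.
under eq_bigr do rewrite mxE mulr_sumr.
rewrite exchange_big; apply: eq_bigr => a _.
under eq_bigr do rewrite mulr_sumr.
rewrite exchange_big; apply: eq_bigr => b _.
by rewrite mulr_sumr; apply: eq_bigr => l _; ring.
Qed.

Lemma coef_bracket_mul N c x y :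
  coef_bracket c (N *m x) (N *m y) =
  coef_bracket (fun a b k => \sum_(i < 8) \sum_(j < 8) N i a * N j b * c i j k) x y.
Proof.
apply/matrixP => k j0; rewrite /coef_bracket !mxE.
under eq_bigr => i _ do under eq_bigr => j _ do rewrite !mxE !mulr_suml.
under eq_bigr => i _ do under eq_bigr => j _ do
  under eq_bigr => a _ do rewrite mulr_sumr mulr_suml.
under eq_bigr => i _ do rewrite exchange_big.
rewrite exchange_big; apply: eq_bigr => a _.
under eq_bigr => i _ do rewrite exchange_big.
rewrite exchange_big; apply: eq_bigr => b _.
rewrite mulr_sumr; apply: eq_bigr => i _.
by rewrite mulr_sumr; apply: eq_bigr => j _; ring.
Qed.

Lemma lie_iso_coef_bracket c cT (P Pinv : 'M[R]_8) :
  P *m Pinv = 1%:M ->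
  (forall a b k, \sum_(l < 8) P k l * c a b l =
                 \sum_(i < 8) \sum_(j < 8) P i a * P j b * cT i j k) ->
  lie_iso (coef_bracket c) (coef_bracket cT).
Proof.
move=> PPinv eq_c; exists P; split; first by have [] := mulmx1_unit PPinv.
by move=> x y; rewrite mul_coef_bracket coef_bracket_mul; apply: eq_coef_bracket.
Qed.

Definition weight_mx (w : nat -> nat) (t : R) : 'M[R]_8 := diag_mx (\row_(k < 8) t ^+ w k).

Lemma weight_mxV w t : t != 0 -> weight_mx w t *m weight_mx w t^-1 = 1%:M.
Proof.
move=> t0; rewrite mulmx_diag; apply/matrixP => i j; rewrite !mxE.
by rewrite exprVn mulfV ?expf_neq0.
Qed.

Lemma invmx_weight_mx w t : t != 0 -> invmx (weight_mx w t^-1) = weight_mx w t.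
Proof.
move=> t0; have := weight_mxV w (invr_neq0 t0); rewrite invrK => WW.
have [Wunit _] := mulmx1_unit WW.
by rewrite -[invmx _]mulmx1 -WW mulmxA mulVmx ?mul1mx.
Qed.

Lemma weight_mx_conj w c t x y : t != 0 ->
  invmx (weight_mx w t^-1) *m
    coef_bracket c (weight_mx w t^-1 *m x) (weight_mx w t^-1 *m y) =
  coef_bracket (fun a b k => t ^+ w k * t^-1 ^+ (w a + w b) * c a b k) x y.
Proof.
move=> t0; rewrite invmx_weight_mx // /weight_mx !mul_diag_mx.
apply/matrixP => k j; rewrite !mxE mulr_sumr; apply: eq_bigr => a _.
rewrite mulr_sumr; apply: eq_bigr => b _; rewrite !mxE exprD; ring.
Qed.

Definition graded_coef (w : nat -> nat) c (a b k : 'I_8) :=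
  if w k == (w a + w b)%N then c a b k else 0.

Lemma cvg_invr_expn n : (fun t : R => t^-1 ^+ n) @ +oo --> ((n == 0)%N%:R : R).
Proof.
elim: n => [|n IHn]; first by under eq_fun do rewrite expr0; exact: cvg_cst.
have inv_cvg0 : (fun t : R => t^-1) @ +oo --> (0 : R).
  by apply/gtr0_cvgV0; [near=> t | exact: cvg_id].
under eq_fun do rewrite exprS.
have -> : ((n.+1 == 0)%N%:R : R) = 0 * (n == 0)%N%:R by rewrite mul0r.
exact: cvgM.
Unshelve. all: by end_near.
Qed.

Lemma cvg_weight_factor (p q : nat) : (p <= q)%N ->
  (fun t : R => t ^+ p * t^-1 ^+ q) @ +oo --> ((p == q)%:R : R).
Proof.
move=> le_pq; rewrite eqn_leq le_pq /= -subn_eq0.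
apply: cvg_trans (cvg_invr_expn (n := (q - p)%N)); apply: near_eq_cvg; near=> t.
have t0 : t != 0 by rewrite gt_eqF.
by rewrite -{2}(subnKC le_pq) exprD mulrA -exprMn mulfV ?expr1n ?mul1r.
Unshelve. all: by end_near.
Qed.

Lemma cvg_weighted_coef (w : nat -> nat) c x y k :
  (forall a b k, c a b k != 0 -> (w k <= w a + w b)%N) ->
  (fun t : R => coef_bracket (fun a b k => t ^+ w k * t^-1 ^+ (w a + w b) * c a b k) x y k 0)
    @ +oo --> coef_bracket (graded_coef w c) x y k 0.
Proof.
move=> wc; under eq_fun do rewrite mxE; rewrite mxE.
apply: cvg_big => [|a _]; first exact: add_continuous.
apply: cvg_big => [|b _]; first exact: add_continuous.
apply: cvgM; first exact: cvg_cst.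
rewrite /graded_coef; have [->|c0] := eqVneq (c a b k) 0.
  by under eq_fun do rewrite mulr0; case: ifP => _; exact: cvg_cst.
have -> : (if w k == (w a + w b)%N then c a b k else 0) =
          (w k == (w a + w b)%N)%:R * c a b k by case: eqP; rewrite ?mul1r ?mul0r.
exact: cvgM (cvg_weight_factor (wc a b k c0)) (cvg_cst _).
Qed.

Lemma graded_contraction (w : nat -> nat) c (L : bracket R) :
  (forall a b k, c a b k != 0 -> (w k <= w a + w b)%N) ->
  lie_iso (coef_bracket (graded_coef w c)) L -> contracts_onto (coef_bracket c) L.
Proof.
move=> wc iso; exists (fun t => weight_mx w t^-1); split.
  move=> t t1; have t0 : t^-1 != 0 by rewrite invr_eq0 gt_eqF // (lt_le_trans ltr01 t1).
  by have [] := mulmx1_unit (weight_mxV w t0).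
exists (coef_bracket (graded_coef w c)); split => // x y k.
apply: cvg_trans (cvg_weighted_coef (x := x) (y := y) (k := k) wc).
apply: near_eq_cvg; near=> t.
by rewrite /= weight_mx_conj // gt_eqF.
Unshelve. all: by end_near.
Qed.

End StructureConstants.

(* A sum that [vm_compute] can evaluate, unlike the locked [\sum]. *)
Definition fsum (V : nmodType) (n : nat) (F : nat -> V) : V :=
  foldr (fun l acc => F l + acc) 0 (iota 0 n).

Lemma fsumE (V : nmodType) n (F : nat -> V) : \sum_(l < n) F l = fsum n F.
Proof.
rewrite -(big_mkord xpredT F) /index_iota subn0 /fsum.
by elim: (iota 0 n) => [|a s IHs]; rewrite ?big_nil ?big_cons ?IHs.
Qed.

Lemma rmorph_fsum (U V : nzRingType) (f : {rmorphism U -> V}) n (F : nat -> U) :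
  f (fsum n F) = fsum n (fun l => f (F l)).
Proof. by rewrite -!fsumE rmorph_sum. Qed.

Definition qtable := seq (nat * nat * nat * rat).

Definition ratr_table (R : realType) (T : qtable) : sc_table R :=
  [seq (e.1, ratr e.2) | e <- T].

Definition wf_table (K : Type) (T : seq (nat * nat * nat * K)) : bool :=
  all (fun e => (0 < e.1.1.1 <= 8)%N && (0 < e.1.1.2 <= 8)%N) T.

Definition qsc_coef (T : qtable) (i j k : nat) : rat :=
  foldr (fun e acc => (if (e.1.1.1 == i) && (e.1.1.2 == j) && (e.1.2 == k) then e.2 else 0)
     - (if (e.1.1.1 == j) && (e.1.1.2 == i) && (e.1.2 == k) then e.2 else 0) + acc) 0 T.

Lemma sc_coef_cons (R : realType) (e : nat * nat * nat * R) l i j k :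
  sc_coef (e :: l) i j k =
  (if (e.1.1.1 == i) && (e.1.1.2 == j) && (e.1.2 == k) then e.2 else 0)
  - (if (e.1.1.1 == j) && (e.1.1.2 == i) && (e.1.2 == k) then e.2 else 0)
  + sc_coef l i j k.
Proof. by rewrite /sc_coef !big_cons; case: ifP => _; case: ifP => _; ring. Qed.

Lemma sc_coef_ratr (R : realType) T i j k :
  sc_coef (ratr_table R T) i j k = ratr (qsc_coef T i j k).
Proof.
elim: T => [|e T IHT]; first by rewrite /sc_coef !big_nil subrr rmorph0.
rewrite sc_coef_cons IHT /= rmorphD rmorphB.
by case: ifP => _; case: ifP => _; rewrite ?rmorph0.
Qed.

Lemma sum_pick (V : zmodType) (F : 'I_8 -> V) (u : nat) : (0 < u <= 8)%N ->
  \sum_(a < 8) (if u == a.+1 then F a else 0) = F (inord u.-1).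
Proof.
case/andP => u0 u8; have ltu : (u.-1 < 8)%N by rewrite -ltnS prednK.
rewrite (bigD1 (inord u.-1)) //= inordK // prednK // eqxx big1 ?addr0 // => a.
by rewrite -val_eqE /= inordK //; case: (u =P a.+1) => // ->; rewrite eqxx.
Qed.

Lemma sum_sc_entry (R : realType) (x y : 'cV[R]_8) (u v w : nat) (c : R) (k : 'I_8) :
  (0 < u <= 8)%N -> (0 < v <= 8)%N ->
  \sum_(a < 8) \sum_(b < 8)
     x a 0 * y b 0 * (if (u == a.+1) && (v == b.+1) && (w == k.+1) then c else 0) =
  if w == k.+1 then c * (x (inord u.-1) 0 * y (inord v.-1) 0) else 0.
Proof.
move=> hu hv; case: (w == k.+1); last first.
  by rewrite big1 // => a _; rewrite big1 // => b _; rewrite andbF mulr0.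
rewrite -(sum_pick (fun a => c * (x a 0 * y (inord v.-1) 0)) hu); apply: eq_bigr => a _.
case: (u == a.+1) => /=; last by rewrite big1 // => b _; rewrite mulr0.
rewrite -(sum_pick (fun b => c * (x a 0 * y b 0)) hv); apply: eq_bigr => b _.
by rewrite andbT; case: (v == b.+1); rewrite ?mulr0 // mulrC.
Qed.

(* Running over the table rather than over all pairs of indices is what keeps the
   certificate checks below fast. *)
Lemma sc_bracket_table (R : realType) (l : sc_table R) x y (k : 'I_8) : wf_table l ->
  sc_bracket l x y k 0 =
  \sum_(e <- l | e.1.2 == k.+1)
     e.2 * (x (inord e.1.1.1.-1) 0 * y (inord e.1.1.2.-1) 0
            - x (inord e.1.1.2.-1) 0 * y (inord e.1.1.1.-1) 0).
Proof.
rewrite mxE; elim: l => [|[[[u v] w] c] l IHl] /=.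
  rewrite big_nil big1 // => a _; rewrite big1 // => b _.
  by rewrite /sc_coef !big_nil subrr mulr0.
case/andP => /andP[hu hv] wfl; rewrite big_cons /= -IHl //.
under eq_bigr => a _ do under eq_bigr => b _ do
  rewrite sc_coef_cons /= [(u == b.+1) && _]andbC mulrDr mulrBr.
under eq_bigr do rewrite big_split sumrB.
rewrite big_split sumrB /= !sum_sc_entry //.
by case: (w == k.+1); rewrite ?subr0 ?add0r //; ring.
Qed.

Definition qbracket_coord (T : qtable) (X Y : nat -> rat) (k : nat) : rat :=
  foldr (fun e acc => (if e.1.2 == k.+1 then
     e.2 * (X e.1.1.1.-1 * Y e.1.1.2.-1 - X e.1.1.2.-1 * Y e.1.1.1.-1) else 0) + acc) 0 T.

Lemma sc_bracket_ratr (R : realType) T (X Y : nat -> rat) (x y : 'cV[R]_8) (k : 'I_8) :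
  wf_table T -> (forall i : 'I_8, x i 0 = ratr (X i)) -> (forall i : 'I_8, y i 0 = ratr (Y i)) ->
  sc_bracket (ratr_table R T) x y k 0 = ratr (qbracket_coord T X Y k).
Proof.
move=> wfT xX yY; rewrite sc_bracket_table; last by rewrite /wf_table all_map.
rewrite big_map; elim: T wfT => [|e T IHT] /=; first by rewrite big_nil rmorph0.
case/andP => /andP[/andP[u0 u8] /andP[v0 v8]] wfT.
have ltu : (e.1.1.1.-1 < 8)%N by rewrite -ltnS prednK.
have ltv : (e.1.1.2.-1 < 8)%N by rewrite -ltnS prednK.
rewrite big_cons IHT // rmorphD; case: ifP => _; rewrite ?rmorph0 ?add0r //.
by rewrite !xX !yY !inordK // rmorphM rmorphB !rmorphM.
Qed.

Definition qmx_entry (M : seq (seq rat)) (i j : nat) : rat := nth 0 (nth [::] M i) j.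

Definition qmx (R : realType) (M : seq (seq rat)) : 'M[R]_8 :=
  \matrix_(i < 8, j < 8) ratr (qmx_entry M i j).

Definition qtransport (Q Qinv : seq (seq rat)) (T : qtable) (a b k : nat) : rat :=
  fsum 8 (fun l => qmx_entry Qinv k l * qbracket_coord T (qmx_entry Q ^~ a) (qmx_entry Q ^~ b) l).

Lemma qtransport_ratr (R : realType) Q Qinv T (a b k : 'I_8) : wf_table T ->
  \sum_(l < 8) qmx R Qinv k l *
     \sum_(i < 8) \sum_(j < 8) qmx R Q i a * qmx R Q j b * sc_coef (ratr_table R T) i.+1 j.+1 l.+1
  = ratr (qtransport Q Qinv T a b k).
Proof.
move=> wfT; rewrite /qtransport rmorph_fsum -fsumE; apply: eq_bigr => l _.
rewrite rmorphM mxE; congr (_ * _).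
transitivity (sc_bracket (ratr_table R T) (col a (qmx R Q)) (col b (qmx R Q)) l 0).
  by rewrite mxE; apply: eq_bigr => i _; apply: eq_bigr => j _; rewrite !mxE.
by apply: sc_bracket_ratr => // i; rewrite !mxE.
Qed.

Definition forall_iota (n : nat) (P : nat -> bool) : bool := all P (iota 0 n).

Lemma forall_iotaP n P : forall_iota n P -> forall i : 'I_n, P i.
Proof. by move=> /allP PP i; apply: PP; rewrite mem_iota /=. Qed.

Definition qinverse (A B : seq (seq rat)) : bool :=
  forall_iota 8 (fun i => forall_iota 8 (fun j =>
    fsum 8 (fun l => qmx_entry A i l * qmx_entry B l j) == (i == j)%:R)).

Lemma qmx_inverse (R : realType) A B : qinverse A B -> qmx R A *m qmx R B = 1%:M.
Proof.
move=> AB; apply/matrixP => i j; rewrite !mxE.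
under eq_bigr do rewrite !mxE -rmorphM.
rewrite (fsumE _ (fun l => ratr (qmx_entry A i l * qmx_entry B l j))) -rmorph_fsum.
by rewrite (eqP (forall_iotaP (forall_iotaP AB i) j)) rmorph_nat.
Qed.

(* The columns of [basis] are the adapted basis of the simple algebra, [weights] are
   the w_k, and [iso] maps the contracted algebra onto the target; the inverses
   certify that [basis] and [iso] are invertible. *)
Record certificate := Certificate {
  basis : seq (seq rat);
  basis_inv : seq (seq rat);
  weights : seq nat;
  iso : seq (seq rat);
  iso_inv : seq (seq rat) }.

Definition certifies (Ts Tt : qtable) (C : certificate) : bool :=
  let w := nth 0%N (weights C) in
  let c := qtransport (basis C) (basis_inv C) Ts in
  [&& wf_table Ts, wf_table Tt, qinverse (basis C) (basis_inv C),
      qinverse (iso C) (iso_inv C),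
      forall_iota 8 (fun a => forall_iota 8 (fun b => forall_iota 8 (fun k =>
         (c a b k != 0) ==> (w k <= w a + w b)%N))) &
      forall_iota 8 (fun a => forall_iota 8 (fun b => forall_iota 8 (fun k =>
         fsum 8 (fun l => qmx_entry (iso C) k l * (if w l == (w a + w b)%N then c a b l else 0))
         == qbracket_coord Tt (qmx_entry (iso C) ^~ a) (qmx_entry (iso C) ^~ b) k)))].

Lemma certified_contraction (R : realType) Ts Tt C : certifies Ts Tt C ->
  contracts_onto (fun x y => qmx R (basis_inv C) *m
                    sc_bracket (ratr_table R Ts) (qmx R (basis C) *m x) (qmx R (basis C) *m y))
                 (sc_bracket (ratr_table R Tt)).
Proof.
case/and5P => wfs wft _ PPinv /andP[].
set w := nth 0%N _; set c := qtransport _ _ _ => /forall_iotaP w_ok /forall_iotaP iso_ok.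
have -> : (fun x y => qmx R (basis_inv C) *m
              sc_bracket (ratr_table R Ts) (qmx R (basis C) *m x) (qmx R (basis C) *m y))
          = coef_bracket (fun a b k => ratr (c a b k)).
  apply: funext => x; apply: funext => y.
  rewrite sc_bracket_coef coef_bracket_mul mul_coef_bracket.
  by apply: eq_coef_bracket => a b k; exact: qtransport_ratr.
apply: (graded_contraction (w := w)).
  by move=> a b k; rewrite fmorph_eq0; exact/implyP/(forall_iotaP (forall_iotaP (w_ok a) b) k).
rewrite sc_bracket_coef; apply: (lie_iso_coef_bracket (qmx_inverse R PPinv)) => a b k.
transitivity (sc_bracket (ratr_table R Tt) (col a (qmx R (iso C))) (col b (qmx R (iso C))) k 0).
  rewrite (sc_bracket_ratr (X := qmx_entry (iso C) ^~ a) (Y := qmx_entry (iso C) ^~ b)) //;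
    last first.
  - by move=> i; rewrite !mxE.
  - by move=> i; rewrite !mxE.
  rewrite -(eqP (forall_iotaP (forall_iotaP (iso_ok a) b) k)) rmorph_fsum -fsumE.
  apply: eq_bigr => l _; rewrite rmorphM mxE /graded_coef.
  by case: ifP; rewrite ?rmorph0.
by rewrite mxE; apply: eq_bigr => i _; apply: eq_bigr => j _; rewrite !mxE.
Qed.

Section Realization.
Variables (R : realType) (K Kq : fieldType).
Variables (emb : {rmorphism R -> K}) (qemb : {rmorphism Kq -> K}).

(* The common shape of [iso_to_cmx] and [iso_to_rmx]; R acts on K through [emb]. *)
Definition realizes (g : 'M[K]_3 -> Prop) (b : bracket R) : Prop :=
  exists f : 'cV[R]_8 -> 'M[K]_3,
    (forall (a : R) x y, f (a *: x + y) = emb a *: f x + f y) /\ injective f /\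
    (forall x, g (f x)) /\ (forall A, g A -> exists x, f x = A) /\
    (forall x y, f (b x y) = f x *m f y - f y *m f x).

Lemma realizes_conj g b (Q Qinv : 'M[R]_8) : Q *m Qinv = 1%:M ->
  realizes g b -> realizes g (fun x y => Qinv *m b (Q *m x) (Q *m y)).
Proof.
move=> QQinv [f [f_lin [f_inj [f_in [f_onto f_br]]]]].
have QinvQ : Qinv *m Q = 1%:M by rewrite mulmx1C.
exists (fun x => f (Q *m x)); split; first by move=> a x y; rewrite mulmxDr -scalemxAr f_lin.
split; first by move=> x y /f_inj /(congr1 (mulmx Qinv)); rewrite !mulmxA QinvQ !mul1mx.
split; first by move=> x; exact: f_in.
split; first by move=> A /f_onto [x <-]; exists (Qinv *m x); rewrite mulmxA QQinv mul1mx.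
by move=> x y; rewrite mulmxA QQinv mul1mx f_br.
Qed.

Definition qbasis_entry (D : seq (seq (seq Kq))) (k i j : nat) : Kq :=
  nth 0 (nth [::] (nth [::] D k) i) j.

Definition qbasis_mx D (k : nat) : 'M[Kq]_3 := \matrix_(i < 3, j < 3) qbasis_entry D k i j.

Definition basis_mx D (k : nat) : 'M[K]_3 := map_mx qemb (qbasis_mx D k).

Definition basis_map D (x : 'cV[R]_8) : 'M[K]_3 := \sum_(k < 8) emb (x k 0) *: basis_mx D k.

Lemma mxtrace_basis_mx D k : \tr (basis_mx D k) = qemb (fsum 3 (fun i => qbasis_entry D k i i)).
Proof. by rewrite rmorph_fsum -fsumE; apply: eq_bigr => i _; rewrite !mxE. Qed.

Lemma basis_map_semilinear D a x y :
  basis_map D (a *: x + y) = emb a *: basis_map D x + basis_map D y.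
Proof.
rewrite /basis_map scaler_sumr -big_split; apply: eq_bigr => k _ /=.
by rewrite !mxE rmorphD rmorphM scalerDl scalerA.
Qed.

Lemma basis_map_ind (P : 'M[K]_3 -> Prop) D :
  P 0 -> (forall a A B, P A -> P B -> P (emb a *: A + B)) ->
  (forall k : 'I_8, P (basis_mx D k)) -> forall x, P (basis_map D x).
Proof. by move=> P0 PZD PD x; rewrite /basis_map; elim/big_rec: _ => // k A _; exact: PZD. Qed.

Lemma basis_map_cancel D (coords : 'M[K]_3 -> 'cV[R]_8) :
  (forall a A B, coords (emb a *: A + B) = a *: coords A + coords B) ->
  (forall l : 'I_8, coords (basis_mx D l) = delta_mx l 0) ->
  cancel (basis_map D) coords.
Proof.
move=> coordsZD coordsD x.
have coords0 : coords 0 = 0.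
  by have := coordsZD 1 0 0; rewrite scaler0 addr0 scale1r -{1}[coords 0]addr0 => /addrI.
rewrite {2}(matrix_sum_delta x) /basis_map; apply/esym.
elim/big_rec2: _ => [|l v A _ ->]; first by rewrite coords0.
by rewrite big_ord1 coordsZD coordsD.
Qed.

Definition commutators_ok D (T : qtable) : bool :=
  forall_iota 8 (fun a => forall_iota 8 (fun b => forall_iota 3 (fun i => forall_iota 3 (fun j =>
    fsum 3 (fun l => qbasis_entry D a i l * qbasis_entry D b l j)
    - fsum 3 (fun l => qbasis_entry D b i l * qbasis_entry D a l j)
    == fsum 8 (fun k => ratr (qsc_coef T a.+1 b.+1 k.+1) * qbasis_entry D k i j))))).

Lemma qbasis_mx_commutator D T : commutators_ok D T -> forall a b : 'I_8,
  qbasis_mx D a *m qbasis_mx D b - qbasis_mx D b *m qbasis_mx D a =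
  \sum_(k < 8) ratr (qsc_coef T a.+1 b.+1 k.+1) *: qbasis_mx D k.
Proof.
move=> DT a b; apply/matrixP => i j; rewrite !mxE summxE.
under eq_bigr do rewrite !mxE.
under [X in _ - X]eq_bigr do rewrite !mxE.
under [RHS]eq_bigr do rewrite !mxE.
move/eqP: (forall_iotaP (forall_iotaP (forall_iotaP (forall_iotaP DT a) b) i) j).
by rewrite -!fsumE.
Qed.

Lemma basis_mx_commutator D T : commutators_ok D T -> forall a b : 'I_8,
  basis_mx D a *m basis_mx D b - basis_mx D b *m basis_mx D a =
  \sum_(k < 8) emb (sc_coef (ratr_table R T) a.+1 b.+1 k.+1) *: basis_mx D k.
Proof.
move=> DT a b; rewrite -!map_mxM -map_mxB (qbasis_mx_commutator DT) map_mx_sum.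
by apply: eq_bigr => k _; rewrite map_mxZ sc_coef_ratr !fmorph_rat.
Qed.

Lemma basis_map_bracket D T : commutators_ok D T -> forall x y,
  basis_map D (sc_bracket (ratr_table R T) x y) =
  basis_map D x *m basis_map D y - basis_map D y *m basis_map D x.
Proof.
move=> DT x y.
have expand u v : basis_map D u *m basis_map D v =
    \sum_(a < 8) \sum_(b < 8) emb (u a 0 * v b 0) *: (basis_mx D a *m basis_mx D b).
  rewrite /basis_map mulmx_suml; apply: eq_bigr => a _.
  rewrite mulmx_sumr; apply: eq_bigr => b _.
  by rewrite -scalemxAl -scalemxAr scalerA rmorphM.
rewrite !expand [X in _ - X]exchange_big -sumrB.
under [RHS]eq_bigr do rewrite -sumrB.
under [RHS]eq_bigr do under eq_bigr do
  rewrite [y _ 0 * _]mulrC -scalerBr (basis_mx_commutator DT).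
rewrite /basis_map /sc_bracket /=; under eq_bigr do rewrite mxE rmorph_sum scaler_suml.
under eq_bigr do under eq_bigr do rewrite rmorph_sum scaler_suml.
rewrite exchange_big; apply: eq_bigr => a _.
rewrite exchange_big; apply: eq_bigr => b _.
by rewrite scaler_sumr; apply: eq_bigr => k _; rewrite scalerA -!rmorphM.
Qed.

(* A - basis_map D (coords A) lies in g and has zero coordinates. *)
Lemma basis_map_onto (g : 'M[K]_3 -> Prop) D (coords : 'M[K]_3 -> 'cV[R]_8) :
  cancel (basis_map D) coords ->
  (forall a A B, coords (emb a *: A + B) = a *: coords A + coords B) ->
  (forall a A B, g A -> g B -> g (emb a *: A + B)) -> (forall x, g (basis_map D x)) ->
  (forall A, g A -> coords A = 0 -> A = 0) ->
  forall A, g A -> basis_map D (coords A) = A.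
Proof.
move=> coordsK coordsZD gZD g_in coords_inj A gA; apply/esym/subr0_eq/coords_inj.
  by have := gZD (-1) _ _ (g_in (coords A)) gA; rewrite (rmorphN1 emb) scaleN1r addrC.
by rewrite addrC -scaleN1r -(rmorphN1 emb) coordsZD coordsK scaleN1r addNr.
Qed.

Lemma basis_realizes (g : 'M[K]_3 -> Prop) D T (coords : 'M[K]_3 -> 'cV[R]_8) :
  commutators_ok D T ->
  (forall a A B, coords (emb a *: A + B) = a *: coords A + coords B) ->
  (forall l : 'I_8, coords (basis_mx D l) = delta_mx l 0) ->
  g 0 -> (forall a A B, g A -> g B -> g (emb a *: A + B)) ->
  (forall k : 'I_8, g (basis_mx D k)) ->
  (forall A, g A -> coords A = 0 -> A = 0) ->
  realizes g (sc_bracket (ratr_table R T)).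
Proof.
move=> DT coordsZD coordsD g0 gZD gD coords_inj.
have coordsK := basis_map_cancel coordsZD coordsD.
have g_in := basis_map_ind g0 gZD gD.
exists (basis_map D); split; first exact: basis_map_semilinear.
split; first exact: can_inj coordsK.
split=> //; split; last exact: basis_map_bracket.
by move=> A gA; exists (coords A); exact: (basis_map_onto coordsK coordsZD gZD g_in coords_inj).
Qed.

End Realization.

Definition ratc (R : realType) (z : rat[i]) : R[i] :=
  let: (a +i* b)%C := z in (ratr a +i* ratr b)%C.

Lemma ratc_is_zmod_morphism (R : realType) : zmod_morphism (ratc R).
Proof. by case=> a b [c d]; rewrite /ratc /= !rmorphB. Qed.

Lemma ratc_is_monoid_morphism (R : realType) : monoid_morphism (ratc R).
Proof.
split; first by rewrite /ratc /= rmorph0 rmorph1.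
by case=> a b [c d]; rewrite /ratc /= !(rmorphB, rmorphD, rmorphM).
Qed.

HB.instance Definition _ (R : realType) :=
  GRing.isZmodMorphism.Build _ _ (ratc R) (ratc_is_zmod_morphism R).
HB.instance Definition _ (R : realType) :=
  GRing.isMonoidMorphism.Build _ _ (ratc R) (ratc_is_monoid_morphism R).

Definition cpart (K : Type) (im : bool) (z : K[i]) : K :=
  if im then complex.Im z else complex.Re z.

Lemma cpart_ratc (R : realType) im z : cpart im (ratc R z) = ratr (cpart im z).
Proof. by case: z => a b; case: im. Qed.

Definition su_coord_pos : seq ('I_3 * 'I_3 * bool) :=
  [:: (0, 0, true); (1, 1, true); (0, 1, false); (0, 1, true);
      (0, 2, false); (0, 2, true); (1, 2, false); (1, 2, true)].

Definition su_coords (R : realType) (A : 'M[R[i]]_3) : 'cV[R]_8 :=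
  \col_(k < 8) let: (i, j, im) := nth (0, 0, false) su_coord_pos k in cpart im (A i j).

Lemma su_coords_semilinear (R : realType) (a : R) A B :
  su_coords ((a%:C)%C *: A + B) = a *: su_coords A + su_coords B.
Proof.
apply/matrixP => k l; rewrite !mxE; case: (nth _ _ _) => [[i j] im]; rewrite !mxE.
by case: (A i j) => ? ?; case: (B i j) => ? ?; case: im; rewrite /cpart /=; simpc.
Qed.

Definition su_coords_ok (D : seq (seq (seq rat[i]))) : bool :=
  forall_iota 8 (fun l => forall_iota 8 (fun k =>
    let: (i, j, im) := nth (0, 0, false) su_coord_pos k in
    cpart im (qbasis_entry D l i j) == (l == k)%:R)).

Lemma su_coords_basis_mx (R : realType) D : su_coords_ok D ->
  forall l : 'I_8, su_coords (basis_mx (ratc R) D l) = delta_mx l 0.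
Proof.
move=> ok l; apply/matrixP => k j; rewrite (ord1 j) !mxE eqxx andbT.
move: (forall_iotaP (forall_iotaP ok l) k).
by case: (nth _ _ _) => [[i j'] im] /eqP qD; rewrite !mxE cpart_ratc qD rmorph_nat eq_sym.
Qed.

Lemma su_coords_eq0 (R : realType) (A : 'M[R[i]]_3) : su_coords A = 0 ->
  [/\ complex.Im (A 0 0) = 0, complex.Im (A 1 1) = 0, A 0 1 = 0, A 0 2 = 0 & A 1 2 = 0].
Proof.
move/matrixP => c0; have c k : su_coords A (inord k) 0 = 0 by rewrite c0 mxE.
move: (c 0) (c 1) (c 2) (c 3) (c 4) (c 5) (c 6) (c 7).
rewrite !mxE !inordK //= => -> -> r01 i01 r02 i02 r12 i12.
have complex0 (z : R[i]) : complex.Re z = 0 -> complex.Im z = 0 -> z = 0.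
  by case: z => a b /= -> ->.
by split=> //; apply: complex0.
Qed.

Lemma ord3P (i : 'I_3) : [\/ i = 0, i = 1 | i = 2].
Proof.
by case: i => [[|[|[|//]]] lti]; [apply: Or31 | apply: Or32 | apply: Or33]; apply: val_inj.
Qed.

Lemma mxtrace3 (V : nmodType) (A : 'M[V]_3) : \tr A = A 0 0 + A 1 1 + A 2 2.
Proof.
rewrite /mxtrace !big_ord_recr big_ord0 /= add0r.
by congr (A _ _ + A _ _ + A _ _); apply: val_inj.
Qed.

(* Both A^* = -A and A^* J + J A = 0 have the form below, so a matrix of su(3) or
   su(2,1) is determined by its strict upper triangle and the imaginary parts of its
   first two diagonal entries. *)
Lemma su_coords_inj (R : realType) (A : 'M[R[i]]_3) (s : 'I_3 -> 'I_3 -> R) :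
  (forall i j, A j i = - ((s i j)%:C)%C * conjc (A i j)) -> (forall i, s i i = 1) ->
  \tr A = 0 -> su_coords A = 0 -> A = 0.
Proof.
move=> skew s1 trA /su_coords_eq0[im00 im11 a01 a02 a12].
have re_diag i : complex.Re (A i i) = 0.
  move: (skew i i); rewrite s1; case: (A i i) => a b; simpc.
  by case=> /eqP; rewrite -addr_eq0 -mulr2n mulrn_eq0 => /eqP.
have diag0 i : complex.Im (A i i) = 0 -> A i i = 0.
  by move: (re_diag i); case: (A i i) => a b /= -> ->.
have a00 := diag0 0 im00; have a11 := diag0 1 im11.
have a22 : A 2 2 = 0 by move: trA; rewrite mxtrace3 a00 a11 !add0r.
have lower i j : A i j = 0 -> A j i = 0 by move=> aij; rewrite skew aij rmorph0 mulr0.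
apply/matrixP => i j; rewrite mxE.
by case: (ord3P i) => ->; case: (ord3P j) => ->; rewrite // lower.
Qed.

Lemma ratc_conj (R : realType) z : ratc R (conjc z) = conjc (ratc R z).
Proof. by case: z => a b; rewrite /= rmorphN. Qed.

Lemma conj_tr_semilinear (R : realType) (a : R) (A B : 'M[R[i]]_3) :
  conj_tr ((a%:C)%C *: A + B) = (a%:C)%C *: conj_tr A + conj_tr B.
Proof. by apply/matrixP => i j; rewrite !mxE rmorphD rmorphM /= oppr0. Qed.

Lemma su3_0 (R : realType) : su3 (0 : 'M[R[i]]_3).
Proof. by split; [apply/matrixP => i j; rewrite !mxE rmorph0 oppr0 | exact: mxtrace0]. Qed.

Lemma su3_semilinear (R : realType) (a : R) A B :
  su3 A -> su3 B -> su3 ((a%:C)%C *: A + B).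
Proof.
move=> [skewA trA] [skewB trB]; split.
  by rewrite conj_tr_semilinear skewA skewB scalerN opprD.
by rewrite mxtraceD mxtraceZ trA trB mulr0 addr0.
Qed.

Definition su3_basis_ok (D : seq (seq (seq rat[i]))) : bool :=
  forall_iota 8 (fun k =>
    forall_iota 3 (fun i => forall_iota 3 (fun j =>
      conjc (qbasis_entry D k j i) == - qbasis_entry D k i j))
    && (fsum 3 (fun i => qbasis_entry D k i i) == 0)).

Lemma su3_basis_mx (R : realType) D : su3_basis_ok D ->
  forall k : 'I_8, su3 (basis_mx (ratc R) D k).
Proof.
move=> ok k; have /andP[skew tr0] := forall_iotaP ok k; split.
  apply/matrixP => i j; rewrite !mxE -ratc_conj.
  by rewrite (eqP (forall_iotaP (forall_iotaP skew i) j)) rmorphN.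
by rewrite mxtrace_basis_mx (eqP tr0) rmorph0.
Qed.

Lemma su3_coords_inj (R : realType) (A : 'M[R[i]]_3) : su3 A -> su_coords A = 0 -> A = 0.
Proof.
case=> skewA trA; apply: (su_coords_inj (s := fun _ _ => 1)) => // i j.
have := congr1 (fun M : 'M[R[i]]_3 => M j i) skewA; rewrite !mxE => ->.
by rewrite rmorph1 mulN1r opprK.
Qed.

Definition sgn21 (K : pzRingType) (i : nat) : K := if i == 2%N then -1 else 1.

Lemma sgn21_sqr (K : pzRingType) i : sgn21 K i * sgn21 K i = 1.
Proof. by rewrite /sgn21; case: eqP; rewrite ?mulrNN mulr1. Qed.

Lemma rmorph_sgn21 (K L : pzRingType) (f : {rmorphism K -> L}) i : f (sgn21 K i) = sgn21 L i.
Proof. by rewrite /sgn21; case: eqP; rewrite ?rmorphN1 ?rmorph1. Qed.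

Lemma J21_diag (R : realType) : J21 R = diag_mx (\row_(i < 3) sgn21 _ i).
Proof. by apply/matrixP => i j; rewrite !mxE eq_sym; case: (j == i). Qed.

Lemma su21_entry (R : realType) (A : 'M[R[i]]_3) i j :
  (conj_tr A *m J21 R + J21 R *m A) i j = conjc (A j i) * sgn21 _ j + sgn21 _ i * A i j.
Proof. by rewrite J21_diag mul_diag_mx mul_mx_diag !mxE. Qed.

Lemma su21_0 (R : realType) : su21 (0 : 'M[R[i]]_3).
Proof.
split; last exact: mxtrace0.
by apply/matrixP => i j; rewrite su21_entry !mxE rmorph0 mul0r mulr0 addr0.
Qed.

Lemma su21_semilinear (R : realType) (a : R) A B :
  su21 A -> su21 B -> su21 ((a%:C)%C *: A + B).
Proof.
move=> [hA trA] [hB trB]; split; last by rewrite mxtraceD mxtraceZ trA trB mulr0 addr0.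
rewrite conj_tr_semilinear mulmxDl mulmxDr -!scalemxAl -scalemxAr.
by rewrite addrACA -scalerDr hA hB scaler0 addr0.
Qed.

Definition su21_basis_ok (D : seq (seq (seq rat[i]))) : bool :=
  forall_iota 8 (fun k =>
    forall_iota 3 (fun i => forall_iota 3 (fun j =>
      conjc (qbasis_entry D k j i) * sgn21 _ j + sgn21 _ i * qbasis_entry D k i j == 0))
    && (fsum 3 (fun i => qbasis_entry D k i i) == 0)).

Lemma su21_basis_mx (R : realType) D : su21_basis_ok D ->
  forall k : 'I_8, su21 (basis_mx (ratc R) D k).
Proof.
move=> ok k; have /andP[twisted tr0] := forall_iotaP ok k; split.
  apply/matrixP => i j; rewrite su21_entry !mxE -ratc_conj -!(rmorph_sgn21 (ratc R)).
  by rewrite -!rmorphM -rmorphD (eqP (forall_iotaP (forall_iotaP twisted i) j)) rmorph0.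
by rewrite mxtrace_basis_mx (eqP tr0) rmorph0.
Qed.

Lemma su21_coords_inj (R : realType) (A : 'M[R[i]]_3) : su21 A -> su_coords A = 0 -> A = 0.
Proof.
case=> twisted trA.
apply: (su_coords_inj (s := fun i j => sgn21 _ i * sgn21 _ j)) => //; last first.
  by move=> i; rewrite sgn21_sqr.
move=> i j; have := congr1 (fun M : 'M[R[i]]_3 => M j i) twisted; rewrite su21_entry mxE => /eqP.
rewrite addrC addr_eq0 => /eqP sAji.
rewrite rmorphM !(rmorph_sgn21 (real_complex R)) -[A j i]mul1r -(sgn21_sqr _ j) -mulrA sAji.
by ring.
Qed.

Definition sl_coord_pos : seq ('I_3 * 'I_3) :=
  [:: (0, 0); (1, 1); (0, 1); (0, 2); (1, 0); (1, 2); (2, 0); (2, 1)].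

Definition sl_coords (R : realType) (A : 'M[R]_3) : 'cV[R]_8 :=
  \col_(k < 8) let: (i, j) := nth (0, 0) sl_coord_pos k in A i j.

Lemma sl_coords_semilinear (R : realType) (a : R) A B :
  sl_coords (a *: A + B) = a *: sl_coords A + sl_coords B.
Proof. by apply/matrixP => k l; rewrite !mxE; case: (nth _ _ _) => i j; rewrite !mxE. Qed.

Definition sl_coords_ok (D : seq (seq (seq rat))) : bool :=
  forall_iota 8 (fun l => forall_iota 8 (fun k =>
    let: (i, j) := nth (0, 0) sl_coord_pos k in qbasis_entry D l i j == (l == k)%:R)).

Lemma sl_coords_basis_mx (R : realType) D : sl_coords_ok D ->
  forall l : 'I_8, sl_coords (basis_mx (@ratr R) D l) = delta_mx l 0.
Proof.
move=> ok l; apply/matrixP => k j; rewrite (ord1 j) !mxE eqxx andbT.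
move: (forall_iotaP (forall_iotaP ok l) k).
by case: (nth _ _ _) => i j' /eqP qD; rewrite !mxE qD rmorph_nat eq_sym.
Qed.

Lemma sl3R_semilinear (R : realType) (a : R) A B : sl3R A -> sl3R B -> sl3R (a *: A + B).
Proof. by rewrite /sl3R mxtraceD mxtraceZ => -> ->; rewrite mulr0 addr0. Qed.

Definition sl3R_basis_ok (D : seq (seq (seq rat))) : bool :=
  forall_iota 8 (fun k => fsum 3 (fun i => qbasis_entry D k i i) == 0).

Lemma sl3R_basis_mx (R : realType) D : sl3R_basis_ok D ->
  forall k : 'I_8, sl3R (basis_mx (@ratr R) D k).
Proof. by move=> ok k; rewrite /sl3R mxtrace_basis_mx (eqP (forall_iotaP ok k)) rmorph0. Qed.

Lemma sl_coords_inj (R : realType) (A : 'M[R]_3) : sl3R A -> sl_coords A = 0 -> A = 0.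
Proof.
move=> trA /matrixP c0; have c k : sl_coords A (inord k) 0 = 0 by rewrite c0 mxE.
move: (c 0) (c 1) (c 2) (c 3) (c 4) (c 5) (c 6) (c 7).
rewrite !mxE !inordK //= => a00 a11 a01 a02 a10 a12 a20 a21.
have a22 : A 2 2 = 0 by move: trA; rewrite /sl3R mxtrace3 a00 a11 !add0r.
apply/matrixP => i j; rewrite mxE.
by case: (ord3P i) => ->; case: (ord3P j) => ->.
Qed.

Lemma iso_to_cmx_realizes (R : realType) g b :
  iso_to_cmx g b = realizes (real_complex R : {rmorphism R -> R[i]}) g b.
Proof. by []. Qed.

Lemma iso_to_rmx_realizes (R : realType) g b :
  iso_to_rmx g b = realizes (idfun : {rmorphism R -> R}) g b.
Proof. by []. Qed.

Lemma certified_realization (R : realType) (K : fieldType) (emb : {rmorphism R -> K})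
    g Ts Tt C :
  realizes emb g (sc_bracket (ratr_table R Ts)) -> certifies Ts Tt C ->
  exists b, realizes emb g b /\ contracts_onto b (sc_bracket (ratr_table R Tt)).
Proof.
move=> realTs cert; eexists; split; last exact: certified_contraction cert.
by apply: realizes_conj realTs; apply: qmx_inverse; case/and5P: cert.
Qed.

Definition su3_basis : seq (seq (seq rat[i])) :=
  [:: [:: [:: 'i%C; 0; 0]; [:: 0; 0; 0]; [:: 0; 0; -'i%C]];
      [:: [:: 0; 0; 0]; [:: 0; 'i%C; 0]; [:: 0; 0; -'i%C]];
      [:: [:: 0; 1; 0]; [:: -1; 0; 0]; [:: 0; 0; 0]];
      [:: [:: 0; 'i%C; 0]; [:: 'i%C; 0; 0]; [:: 0; 0; 0]];
      [:: [:: 0; 0; 1]; [:: 0; 0; 0]; [:: -1; 0; 0]];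
      [:: [:: 0; 0; 'i%C]; [:: 0; 0; 0]; [:: 'i%C; 0; 0]];
      [:: [:: 0; 0; 0]; [:: 0; 0; 1]; [:: 0; -1; 0]];
      [:: [:: 0; 0; 0]; [:: 0; 0; 'i%C]; [:: 0; 'i%C; 0]]].

Definition su3_table : qtable :=
  [:: (1, 3, 4, 1); (1, 4, 3, -1); (1, 5, 6, 2); (1, 6, 5, -2); (1, 7, 8, 1); (1, 8, 7, -1);
      (2, 3, 4, -1); (2, 4, 3, 1); (2, 5, 6, 1); (2, 6, 5, -1); (2, 7, 8, 2); (2, 8, 7, -2);
      (3, 4, 1, 2); (3, 4, 2, -2); (3, 5, 7, -1); (3, 6, 8, -1); (3, 7, 5, 1); (3, 8, 6, 1);
      (4, 5, 8, 1); (4, 6, 7, -1); (4, 7, 6, 1); (4, 8, 5, -1);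
      (5, 6, 1, 2); (5, 7, 3, -1); (5, 8, 4, 1); (6, 7, 4, -1); (6, 8, 3, -1); (7, 8, 2, 2)].

Lemma su3_realization (R : realType) :
  iso_to_cmx (@su3 R) (sc_bracket (ratr_table R su3_table)).
Proof.
rewrite iso_to_cmx_realizes.
apply: (basis_realizes (qemb := ratc R) (D := su3_basis) (coords := @su_coords R)).
- by vm_compute.
- exact: su_coords_semilinear.
- by apply: su_coords_basis_mx; vm_compute.
- exact: su3_0.
- exact: su3_semilinear.
- by apply: su3_basis_mx; vm_compute.
- exact: su3_coords_inj.
Qed.

Definition su21_basis : seq (seq (seq rat[i])) :=
  [:: [:: [:: 'i%C; 0; 0]; [:: 0; 0; 0]; [:: 0; 0; -'i%C]];
      [:: [:: 0; 0; 0]; [:: 0; 'i%C; 0]; [:: 0; 0; -'i%C]];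
      [:: [:: 0; 1; 0]; [:: -1; 0; 0]; [:: 0; 0; 0]];
      [:: [:: 0; 'i%C; 0]; [:: 'i%C; 0; 0]; [:: 0; 0; 0]];
      [:: [:: 0; 0; 1]; [:: 0; 0; 0]; [:: 1; 0; 0]];
      [:: [:: 0; 0; 'i%C]; [:: 0; 0; 0]; [:: -'i%C; 0; 0]];
      [:: [:: 0; 0; 0]; [:: 0; 0; 1]; [:: 0; 1; 0]];
      [:: [:: 0; 0; 0]; [:: 0; 0; 'i%C]; [:: 0; -'i%C; 0]]].

Definition su21_table : qtable :=
  [:: (1, 3, 4, 1); (1, 4, 3, -1); (1, 5, 6, 2); (1, 6, 5, -2); (1, 7, 8, 1); (1, 8, 7, -1);
      (2, 3, 4, -1); (2, 4, 3, 1); (2, 5, 6, 1); (2, 6, 5, -1); (2, 7, 8, 2); (2, 8, 7, -2);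
      (3, 4, 1, 2); (3, 4, 2, -2); (3, 5, 7, -1); (3, 6, 8, -1); (3, 7, 5, 1); (3, 8, 6, 1);
      (4, 5, 8, 1); (4, 6, 7, -1); (4, 7, 6, 1); (4, 8, 5, -1);
      (5, 6, 1, -2); (5, 7, 3, 1); (5, 8, 4, -1); (6, 7, 4, 1); (6, 8, 3, 1); (7, 8, 2, -2)].

Lemma su21_realization (R : realType) :
  iso_to_cmx (@su21 R) (sc_bracket (ratr_table R su21_table)).
Proof.
rewrite iso_to_cmx_realizes.
apply: (basis_realizes (qemb := ratc R) (D := su21_basis) (coords := @su_coords R)).
- by vm_compute.
- exact: su_coords_semilinear.
- by apply: su_coords_basis_mx; vm_compute.
- exact: su21_0.
- exact: su21_semilinear.
- by apply: su21_basis_mx; vm_compute.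
- exact: su21_coords_inj.
Qed.

Definition sl3R_basis : seq (seq (seq rat)) :=
  [:: [:: [:: 1; 0; 0]; [:: 0; 0; 0]; [:: 0; 0; -1]];
      [:: [:: 0; 0; 0]; [:: 0; 1; 0]; [:: 0; 0; -1]];
      [:: [:: 0; 1; 0]; [:: 0; 0; 0]; [:: 0; 0; 0]];
      [:: [:: 0; 0; 1]; [:: 0; 0; 0]; [:: 0; 0; 0]];
      [:: [:: 0; 0; 0]; [:: 1; 0; 0]; [:: 0; 0; 0]];
      [:: [:: 0; 0; 0]; [:: 0; 0; 1]; [:: 0; 0; 0]];
      [:: [:: 0; 0; 0]; [:: 0; 0; 0]; [:: 1; 0; 0]];
      [:: [:: 0; 0; 0]; [:: 0; 0; 0]; [:: 0; 1; 0]]].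

Definition sl3R_table : qtable :=
  [:: (1, 3, 3, 1); (1, 4, 4, 2); (1, 5, 5, -1); (1, 6, 6, 1); (1, 7, 7, -2); (1, 8, 8, -1);
      (2, 3, 3, -1); (2, 4, 4, 1); (2, 5, 5, 1); (2, 6, 6, 2); (2, 7, 7, -1); (2, 8, 8, -2);
      (3, 5, 1, 1); (3, 5, 2, -1); (3, 6, 4, 1); (3, 7, 8, -1); (4, 5, 6, -1); (4, 7, 1, 1);
      (4, 8, 3, 1); (5, 8, 7, -1); (6, 7, 5, 1); (6, 8, 2, 1)].

Lemma sl3R_realization (R : realType) :
  iso_to_rmx (@sl3R R) (sc_bracket (ratr_table R sl3R_table)).
Proof.
rewrite iso_to_rmx_realizes.
apply: (basis_realizes (qemb := @ratr R) (D := sl3R_basis) (coords := @sl_coords R)).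
- by vm_compute.
- exact: sl_coords_semilinear.
- by apply: sl_coords_basis_mx; vm_compute.
- exact: mxtrace0.
- exact: sl3R_semilinear.
- by apply: sl3R_basis_mx; vm_compute.
- exact: sl_coords_inj.
Qed.

Lemma su3_certified (R : realType) Tt C : certifies su3_table Tt C ->
  su3_contracts_onto (sc_bracket (ratr_table R Tt)).
Proof.
move=> cert; have := su3_realization R; rewrite iso_to_cmx_realizes.
by move=> /certified_realization/(_ cert)[b]; exists b.
Qed.

Lemma su21_certified (R : realType) Tt C : certifies su21_table Tt C ->
  su21_contracts_onto (sc_bracket (ratr_table R Tt)).
Proof.
move=> cert; have := su21_realization R; rewrite iso_to_cmx_realizes.
by move=> /certified_realization/(_ cert)[b]; exists b.
Qed.

Lemma sl3R_certified (R : realType) Tt C : certifies sl3R_table Tt C ->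
  sl3R_contracts_onto (sc_bracket (ratr_table R Tt)).
Proof.
move=> cert; have := sl3R_realization R; rewrite iso_to_rmx_realizes.
by move=> /certified_realization/(_ cert)[b]; exists b.
Qed.

Definition tabA_q : qtable :=
  [:: (2, 3, 1, 1); (1, 2, 3, 1); (1, 3, 2, -1); (1, 4, 7, 2^-1); (1, 5, 6, 2^-1);
      (1, 6, 5, -2^-1); (1, 7, 4, -2^-1); (2, 4, 5, 2^-1); (2, 5, 4, -2^-1); (2, 6, 7, 2^-1);
      (2, 7, 6, -2^-1); (3, 4, 6, 2^-1); (3, 5, 7, -2^-1); (3, 6, 4, -2^-1); (3, 7, 5, 2^-1)].

Definition tabB_q : qtable :=
  [:: (1, 2, 2, 2); (1, 3, 3, -2); (2, 3, 1, 1); (1, 4, 4, 1); (1, 5, 5, -1); (2, 5, 4, 1);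
      (3, 4, 5, 1); (1, 6, 6, 1); (1, 7, 7, -1); (2, 7, 6, 1); (3, 6, 7, 1)].

Lemma L8_2_ratr (R : realType) :
  @L8_2 R = sc_bracket (ratr_table R (tabA_q ++ [:: (4, 5, 8, 1); (6, 7, 8, -1)])).
Proof. by rewrite /L8_2 /= ?rmorphN ?fmorphV ?rmorph1 ?rmorph_nat. Qed.

Lemma L8_4_0_ratr (R : realType) :
  @L8_4_0 R = sc_bracket (ratr_table R
    (tabA_q ++ [:: (4, 8, 6, -1); (5, 8, 7, -1); (6, 8, 4, 1); (7, 8, 5, 1)])).
Proof. by rewrite /L8_4_0 /= ?rmorphN ?fmorphV ?rmorph1 ?rmorph_nat. Qed.

Lemma L8_5_ratr (R : realType) :
  @L8_5 R = sc_bracket (ratr_table R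
    [:: (2, 3, 1, 1); (1, 2, 3, 1); (1, 3, 2, -1); (1, 4, 7, 2^-1); (1, 5, 6, -2^-1);
        (1, 6, 5, 2); (1, 6, 8, -1); (1, 7, 4, -2); (1, 8, 6, 3); (2, 4, 6, 2^-1);
        (2, 5, 7, 2^-1); (2, 6, 4, -2); (2, 7, 5, -2); (2, 7, 8, -1); (2, 8, 7, 3);
        (3, 4, 5, 2); (3, 5, 4, -2); (3, 6, 7, 1); (3, 7, 6, -1)]).
Proof. by rewrite /L8_5 /= ?rmorphN ?fmorphV ?rmorph1 ?rmorph_nat. Qed.

Lemma L8_13_ratr (R : realType) (eps : rat) :
  @L8_13 R (ratr eps) = sc_bracket (ratr_table R (tabB_q ++ [:: (4, 5, 8, 1); (6, 7, 8, eps)])).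
Proof. by rewrite /L8_13 /= ?rmorphN ?rmorph1 ?rmorph_nat. Qed.

Lemma L8_14_ratr (R : realType) :
  @L8_14 R = sc_bracket (ratr_table R (tabB_q ++ [:: (6, 8, 4, 1); (7, 8, 5, 1)])).
Proof. by rewrite /L8_14 /= ?rmorphN ?rmorph1 ?rmorph_nat. Qed.

Lemma L8_15_ratr (R : realType) :
  @L8_15 R = sc_bracket (ratr_table R (tabB_q ++ [:: (6, 7, 8, 1); (6, 8, 4, 1); (7, 8, 5, 1)])).
Proof. by rewrite /L8_15 /= ?rmorphN ?rmorph1 ?rmorph_nat. Qed.

Lemma L8_17_m1_ratr (R : realType) :
  @L8_17_m1 R = sc_bracket (ratr_table R
    (tabB_q ++ [:: (4, 8, 4, 1); (5, 8, 5, 1); (6, 8, 6, -1); (7, 8, 7, -1)])).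
Proof. by rewrite /L8_17_m1 /= ?rmorphN ?rmorph1 ?rmorph_nat. Qed.

Lemma L8_18_0_ratr (R : realType) :
  @L8_18_0 R = sc_bracket (ratr_table R
    (tabB_q ++ [:: (4, 8, 6, -1); (5, 8, 7, -1); (6, 8, 4, 1); (7, 8, 5, 1)])).
Proof. by rewrite /L8_18_0 /= ?rmorphN ?rmorph1 ?rmorph_nat. Qed.

Lemma L8_21_ratr (R : realType) :
  @L8_21 R = sc_bracket (ratr_table R
    [:: (1, 2, 2, 2); (1, 3, 3, -2); (2, 3, 1, 1); (1, 4, 4, 4); (1, 5, 5, 2); (1, 7, 7, -2);
        (1, 8, 8, -4); (2, 5, 4, 4); (2, 6, 5, 3); (2, 7, 6, 2); (2, 8, 7, 1); (3, 4, 5, 1);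
        (3, 5, 6, 2); (3, 6, 7, 3); (3, 7, 8, 4)]).
Proof. by rewrite /L8_21 /= ?rmorphN ?rmorph1 ?rmorph_nat. Qed.

Definition basis_su3_to_L8_2 : seq (seq rat) :=
  [:: [:: 0; 0; -1/2; 0; 0; 0; 0; 1/3];
      [:: 0; 0; 1/2; 0; 0; 0; 0; 1/3];
      [:: 0; -1/2; 0; 0; 0; 0; 0; 0];
      [:: -1/2; 0; 0; 0; 0; 0; 0; 0];
      [:: 0; 0; 0; 1; 0; 0; 0; 0];
      [:: 0; 0; 0; 0; 1; 0; 0; 0];
      [:: 0; 0; 0; 0; 0; 1; 0; 0];
      [:: 0; 0; 0; 0; 0; 0; 1; 0]].

Definition basis_inv_su3_to_L8_2 : seq (seq rat) :=
  [:: [:: 0; 0; 0; -2; 0; 0; 0; 0];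
      [:: 0; 0; -2; 0; 0; 0; 0; 0];
      [:: -1; 1; 0; 0; 0; 0; 0; 0];
      [:: 0; 0; 0; 0; 1; 0; 0; 0];
      [:: 0; 0; 0; 0; 0; 1; 0; 0];
      [:: 0; 0; 0; 0; 0; 0; 1; 0];
      [:: 0; 0; 0; 0; 0; 0; 0; 1];
      [:: 3/2; 3/2; 0; 0; 0; 0; 0; 0]].

Definition su3_to_L8_2 : certificate :=
  {| basis := basis_su3_to_L8_2;
     basis_inv := basis_inv_su3_to_L8_2;
     weights := [:: 0; 0; 0; 1; 1; 1; 1; 2];
     iso :=
      [:: [:: 1; 0; 0; 0; 0; 0; 0; 0];
          [:: 0; 1; 0; 0; 0; 0; 0; 0];
          [:: 0; 0; 1; 0; 0; 0; 0; 0];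
          [:: 0; 0; 0; 0; 3; -3; 0; 0];
          [:: 0; 0; 0; 3; 0; 0; 3; 0];
          [:: 0; 0; 0; 3; 0; 0; -3; 0];
          [:: 0; 0; 0; 0; 3; 3; 0; 0];
          [:: 0; 0; 0; 0; 0; 0; 0; -6]];
     iso_inv :=
      [:: [:: 1; 0; 0; 0; 0; 0; 0; 0];
          [:: 0; 1; 0; 0; 0; 0; 0; 0];
          [:: 0; 0; 1; 0; 0; 0; 0; 0];
          [:: 0; 0; 0; 0; 1/6; 1/6; 0; 0];
          [:: 0; 0; 0; 1/6; 0; 0; 1/6; 0];
          [:: 0; 0; 0; -1/6; 0; 0; 1/6; 0];
          [:: 0; 0; 0; 0; 1/6; -1/6; 0; 0];
          [:: 0; 0; 0; 0; 0; 0; 0; -1/6]] |}.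

Definition iso_su3_to_L8_4_0 : seq (seq rat) :=
  [:: [:: 1; 0; 0; 0; 0; 0; 0; 0];
      [:: 0; 1; 0; 0; 0; 0; 0; 0];
      [:: 0; 0; 1; 0; 0; 0; 0; 0];
      [:: 0; 0; 0; -1; 0; 0; 0; 0];
      [:: 0; 0; 0; 0; 0; -1; 0; 0];
      [:: 0; 0; 0; 0; 1; 0; 0; 0];
      [:: 0; 0; 0; 0; 0; 0; 1; 0];
      [:: 0; 0; 0; 0; 0; 0; 0; -1]].

Definition iso_inv_su3_to_L8_4_0 : seq (seq rat) :=
  [:: [:: 1; 0; 0; 0; 0; 0; 0; 0];
      [:: 0; 1; 0; 0; 0; 0; 0; 0];
      [:: 0; 0; 1; 0; 0; 0; 0; 0];
      [:: 0; 0; 0; -1; 0; 0; 0; 0];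
      [:: 0; 0; 0; 0; 0; 1; 0; 0];
      [:: 0; 0; 0; 0; -1; 0; 0; 0];
      [:: 0; 0; 0; 0; 0; 0; 1; 0];
      [:: 0; 0; 0; 0; 0; 0; 0; -1]].

Definition su3_to_L8_4_0 : certificate :=
  {| basis := basis_su3_to_L8_2;
     basis_inv := basis_inv_su3_to_L8_2;
     weights := [:: 0; 0; 0; 1; 1; 1; 1; 0];
     iso := iso_su3_to_L8_4_0;
     iso_inv := iso_inv_su3_to_L8_4_0 |}.

Definition iso_su3_to_L8_5 : seq (seq rat) :=
  [:: [:: 1; 0; 0; 0; 0; 0; 0; 0];
      [:: 0; 1; 0; 0; 0; 0; 0; 0];
      [:: 0; 0; 1; 0; 0; 0; 0; 0];
      [:: 0; 0; 0; 0; 0; -4; 0; 0];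
      [:: 0; 0; 0; 4; -2; 0; 0; 0];
      [:: 0; 0; 0; 0; 0; 0; 0; 2];
      [:: 0; 0; 0; 0; 0; 0; -2; 0];
      [:: 0; 0; 0; 0; 1; 0; 0; 0]].

Definition iso_inv_su3_to_L8_5 : seq (seq rat) :=
  [:: [:: 1; 0; 0; 0; 0; 0; 0; 0];
      [:: 0; 1; 0; 0; 0; 0; 0; 0];
      [:: 0; 0; 1; 0; 0; 0; 0; 0];
      [:: 0; 0; 0; 0; 1/4; 0; 0; 1/2];
      [:: 0; 0; 0; 0; 0; 0; 0; 1];
      [:: 0; 0; 0; -1/4; 0; 0; 0; 0];
      [:: 0; 0; 0; 0; 0; 0; -1/2; 0];
      [:: 0; 0; 0; 0; 0; 1/2; 0; 0]].

Definition su3_to_L8_5 : certificate :=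
  {| basis :=
      [:: [:: 0; 0; 0; 1; 0; 0; 0; 0];
          [:: 0; 0; 0; -1; 1; 0; 0; 0];
          [:: 0; 0; -1; 0; 0; 0; 0; 0];
          [:: 0; 0; 0; 0; 0; 1; 0; 0];
          [:: 0; 1; 0; 0; 0; 0; 0; 0];
          [:: 0; 0; 0; 0; 0; 0; 1; 0];
          [:: -1; 0; 0; 0; 0; 0; 0; 0];
          [:: 0; 0; 0; 0; 0; 0; 0; 1]];
     basis_inv :=
      [:: [:: 0; 0; 0; 0; 0; 0; -1; 0];
          [:: 0; 0; 0; 0; 1; 0; 0; 0];
          [:: 0; 0; -1; 0; 0; 0; 0; 0];
          [:: 1; 0; 0; 0; 0; 0; 0; 0];
          [:: 1; 1; 0; 0; 0; 0; 0; 0];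
          [:: 0; 0; 0; 1; 0; 0; 0; 0];
          [:: 0; 0; 0; 0; 0; 1; 0; 0];
          [:: 0; 0; 0; 0; 0; 0; 0; 1]];
     weights := [:: 0; 0; 0; 1; 1; 1; 1; 1];
     iso := iso_su3_to_L8_5;
     iso_inv := iso_inv_su3_to_L8_5 |}.

Definition su21_to_L8_2 : certificate :=
  {| basis := basis_su3_to_L8_2;
     basis_inv := basis_inv_su3_to_L8_2;
     weights := [:: 0; 0; 0; 1; 1; 1; 1; 2];
     iso :=
      [:: [:: 1; 0; 0; 0; 0; 0; 0; 0];
          [:: 0; 1; 0; 0; 0; 0; 0; 0];
          [:: 0; 0; 1; 0; 0; 0; 0; 0];
          [:: 0; 0; 0; 0; 3; -3; 0; 0];
          [:: 0; 0; 0; 3; 0; 0; 3; 0];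
          [:: 0; 0; 0; 3; 0; 0; -3; 0];
          [:: 0; 0; 0; 0; 3; 3; 0; 0];
          [:: 0; 0; 0; 0; 0; 0; 0; 6]];
     iso_inv :=
      [:: [:: 1; 0; 0; 0; 0; 0; 0; 0];
          [:: 0; 1; 0; 0; 0; 0; 0; 0];
          [:: 0; 0; 1; 0; 0; 0; 0; 0];
          [:: 0; 0; 0; 0; 1/6; 1/6; 0; 0];
          [:: 0; 0; 0; 1/6; 0; 0; 1/6; 0];
          [:: 0; 0; 0; -1/6; 0; 0; 1/6; 0];
          [:: 0; 0; 0; 0; 1/6; -1/6; 0; 0];
          [:: 0; 0; 0; 0; 0; 0; 0; 1/6]] |}.

Definition su21_to_L8_4_0 : certificate :=
  {| basis := basis_su3_to_L8_2;
     basis_inv := basis_inv_su3_to_L8_2;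
     weights := [:: 0; 0; 0; 1; 1; 1; 1; 0];
     iso := iso_su3_to_L8_4_0;
     iso_inv := iso_inv_su3_to_L8_4_0 |}.

Definition basis_su21_to_L8_13 : seq (seq rat) :=
  [:: [:: 0; 1/2; -1/2; 0; 0; 0; 0; 1];
      [:: 0; 0; 0; 0; 0; 0; 0; -2];
      [:: 0; 0; 0; 1; 0; 0; 0; 0];
      [:: 0; 0; 0; 0; 1; 0; 0; 0];
      [:: 1; 0; 0; 0; 0; 0; 0; 0];
      [:: 0; -1/2; -1/2; 0; 0; 0; 0; 0];
      [:: 0; 0; 0; 0; 0; 1; 0; 0];
      [:: 0; 0; 0; 0; 0; 0; 1; 0]].

Definition basis_inv_su21_to_L8_13 : seq (seq rat) :=
  [:: [:: 0; 0; 0; 0; 1; 0; 0; 0];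
      [:: 1; 1/2; 0; 0; 0; -1; 0; 0];
      [:: -1; -1/2; 0; 0; 0; -1; 0; 0];
      [:: 0; 0; 1; 0; 0; 0; 0; 0];
      [:: 0; 0; 0; 1; 0; 0; 0; 0];
      [:: 0; 0; 0; 0; 0; 0; 1; 0];
      [:: 0; 0; 0; 0; 0; 0; 0; 1];
      [:: 0; -1/2; 0; 0; 0; 0; 0; 0]].

Definition su21_to_L8_13 : certificate :=
  {| basis := basis_su21_to_L8_13;
     basis_inv := basis_inv_su21_to_L8_13;
     weights := [:: 0; 0; 0; 1; 1; 1; 1; 2];
     iso :=
      [:: [:: 1; 0; 0; 0; 0; 0; 0; 0];
          [:: 0; 1; 0; 0; 0; 0; 0; 0];
          [:: 0; 0; 1; 0; 0; 0; 0; 0];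
          [:: 0; 0; 0; -1; 0; -1; 0; 0];
          [:: 0; 0; 0; 0; 1; 0; 1; 0];
          [:: 0; 0; 0; 0; -1; 0; 1; 0];
          [:: 0; 0; 0; -1; 0; 1; 0; 0];
          [:: 0; 0; 0; 0; 0; 0; 0; -2]];
     iso_inv :=
      [:: [:: 1; 0; 0; 0; 0; 0; 0; 0];
          [:: 0; 1; 0; 0; 0; 0; 0; 0];
          [:: 0; 0; 1; 0; 0; 0; 0; 0];
          [:: 0; 0; 0; -1/2; 0; 0; -1/2; 0];
          [:: 0; 0; 0; 0; 1/2; -1/2; 0; 0];
          [:: 0; 0; 0; -1/2; 0; 0; 1/2; 0];
          [:: 0; 0; 0; 0; 1/2; 1/2; 0; 0];
          [:: 0; 0; 0; 0; 0; 0; 0; -1/2]] |}.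

Definition basis_su21_to_L8_14 : seq (seq rat) :=
  [:: [:: 0; 1/2; -1/2; 0; 0; 0; 0; 1];
      [:: 0; 0; 0; 0; 0; 0; 0; -2];
      [:: 0; 0; 0; 0; 3; 1; 0; 0];
      [:: 0; 0; 0; 3; 0; 0; -1; 0];
      [:: 1; 0; 0; 0; 0; 0; 0; 0];
      [:: 0; -1/2; -1/2; 0; 0; 0; 0; 0];
      [:: 0; 0; 0; 0; -3; 1; 0; 0];
      [:: 0; 0; 0; -3; 0; 0; -1; 0]].

Definition basis_inv_su21_to_L8_14 : seq (seq rat) :=
  [:: [:: 0; 0; 0; 0; 1; 0; 0; 0];
      [:: 1; 1/2; 0; 0; 0; -1; 0; 0];
      [:: -1; -1/2; 0; 0; 0; -1; 0; 0];
      [:: 0; 0; 0; 1/6; 0; 0; 0; -1/6];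
      [:: 0; 0; 1/6; 0; 0; 0; -1/6; 0];
      [:: 0; 0; 1/2; 0; 0; 0; 1/2; 0];
      [:: 0; 0; 0; -1/2; 0; 0; 0; -1/2];
      [:: 0; -1/2; 0; 0; 0; 0; 0; 0]].

Definition neg_last_coord : seq (seq rat) :=
  [:: [:: 1; 0; 0; 0; 0; 0; 0; 0];
      [:: 0; 1; 0; 0; 0; 0; 0; 0];
      [:: 0; 0; 1; 0; 0; 0; 0; 0];
      [:: 0; 0; 0; 1; 0; 0; 0; 0];
      [:: 0; 0; 0; 0; 1; 0; 0; 0];
      [:: 0; 0; 0; 0; 0; 1; 0; 0];
      [:: 0; 0; 0; 0; 0; 0; 1; 0];
      [:: 0; 0; 0; 0; 0; 0; 0; -1]].

Definition su21_to_L8_14 : certificate :=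
  {| basis := basis_su21_to_L8_14;
     basis_inv := basis_inv_su21_to_L8_14;
     weights := [:: 0; 0; 0; 2; 2; 1; 1; 1];
     iso := neg_last_coord;
     iso_inv := neg_last_coord |}.

Definition su21_to_L8_15 : certificate :=
  {| basis := basis_su21_to_L8_14;
     basis_inv := basis_inv_su21_to_L8_14;
     weights := [:: 0; 0; 0; 3; 3; 1; 1; 2];
     iso :=
      [:: [:: 1; 0; 0; 0; 0; 0; 0; 0];
          [:: 0; 1; 0; 0; 0; 0; 0; 0];
          [:: 0; 0; 1; 0; 0; 0; 0; 0];
          [:: 0; 0; 0; 1/2; 0; 0; 0; 0];
          [:: 0; 0; 0; 0; 1/2; 0; 0; 0];
          [:: 0; 0; 0; 0; 0; 1; 0; 0];
          [:: 0; 0; 0; 0; 0; 0; 1; 0];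
          [:: 0; 0; 0; 0; 0; 0; 0; -1/2]];
     iso_inv :=
      [:: [:: 1; 0; 0; 0; 0; 0; 0; 0];
          [:: 0; 1; 0; 0; 0; 0; 0; 0];
          [:: 0; 0; 1; 0; 0; 0; 0; 0];
          [:: 0; 0; 0; 2; 0; 0; 0; 0];
          [:: 0; 0; 0; 0; 2; 0; 0; 0];
          [:: 0; 0; 0; 0; 0; 1; 0; 0];
          [:: 0; 0; 0; 0; 0; 0; 1; 0];
          [:: 0; 0; 0; 0; 0; 0; 0; -2]] |}.

Definition su21_to_L8_18_0 : certificate :=
  {| basis := basis_su21_to_L8_13;
     basis_inv := basis_inv_su21_to_L8_13;
     weights := [:: 0; 0; 0; 1; 1; 1; 1; 0];
     iso :=
      [:: [:: 1; 0; 0; 0; 0; 0; 0; 0];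
          [:: 0; 1; 0; 0; 0; 0; 0; 0];
          [:: 0; 0; 1; 0; 0; 0; 0; 0];
          [:: 0; 0; 0; -1; 0; -1; 0; 0];
          [:: 0; 0; 0; 0; 1; 0; 1; 0];
          [:: 0; 0; 0; 0; -1; 0; 1; 0];
          [:: 0; 0; 0; -1; 0; 1; 0; 0];
          [:: 0; 0; 0; 0; 0; 0; 0; 3]];
     iso_inv :=
      [:: [:: 1; 0; 0; 0; 0; 0; 0; 0];
          [:: 0; 1; 0; 0; 0; 0; 0; 0];
          [:: 0; 0; 1; 0; 0; 0; 0; 0];
          [:: 0; 0; 0; -1/2; 0; 0; -1/2; 0];
          [:: 0; 0; 0; 0; 1/2; -1/2; 0; 0];
          [:: 0; 0; 0; -1/2; 0; 0; 1/2; 0];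
          [:: 0; 0; 0; 0; 1/2; 1/2; 0; 0];
          [:: 0; 0; 0; 0; 0; 0; 0; 1/3]] |}.

Definition iso_su21_to_L8_21 : seq (seq rat) :=
  [:: [:: 1; 0; 0; 0; 0; 0; 0; 0];
      [:: 0; 1; 0; 0; 0; 0; 0; 0];
      [:: 0; 0; 1; 0; 0; 0; 0; 0];
      [:: 0; 0; 0; 1/24; 0; 0; 0; 0];
      [:: 0; 0; 0; 0; 1/24; 0; 0; 0];
      [:: 0; 0; 0; 0; 0; 1/12; 0; 0];
      [:: 0; 0; 0; 0; 0; 0; 1/4; 0];
      [:: 0; 0; 0; 0; 0; 0; 0; 1]].

Definition iso_inv_su21_to_L8_21 : seq (seq rat) :=
  [:: [:: 1; 0; 0; 0; 0; 0; 0; 0];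
      [:: 0; 1; 0; 0; 0; 0; 0; 0];
      [:: 0; 0; 1; 0; 0; 0; 0; 0];
      [:: 0; 0; 0; 24; 0; 0; 0; 0];
      [:: 0; 0; 0; 0; 24; 0; 0; 0];
      [:: 0; 0; 0; 0; 0; 12; 0; 0];
      [:: 0; 0; 0; 0; 0; 0; 4; 0];
      [:: 0; 0; 0; 0; 0; 0; 0; 1]].

Definition su21_to_L8_21 : certificate :=
  {| basis :=
      [:: [:: 0; 0; 0; -1; 0; 4; 0; -24];
          [:: 0; 0; 0; 0; 0; -8; 0; 0];
          [:: 0; 1; -1; 0; 0; 0; 0; 0];
          [:: 0; 0; 0; 0; -2; 0; 12; 0];
          [:: 2; 0; 0; 0; 0; 0; 0; 0];
          [:: 0; 0; 0; 1; 0; 0; 0; -24];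
          [:: 0; 1; 1; 0; 0; 0; 0; 0];
          [:: 0; 0; 0; 0; 2; 0; 12; 0]];
     basis_inv :=
      [:: [:: 0; 0; 0; 0; 1/2; 0; 0; 0];
          [:: 0; 0; 1/2; 0; 0; 0; 1/2; 0];
          [:: 0; 0; -1/2; 0; 0; 0; 1/2; 0];
          [:: -1/2; -1/4; 0; 0; 0; 1/2; 0; 0];
          [:: 0; 0; 0; -1/4; 0; 0; 0; 1/4];
          [:: 0; -1/8; 0; 0; 0; 0; 0; 0];
          [:: 0; 0; 0; 1/24; 0; 0; 0; 1/24];
          [:: -1/48; -1/96; 0; 0; 0; -1/48; 0; 0]];
     weights := [:: 0; 0; 0; 1; 1; 1; 1; 1];
     iso := iso_su21_to_L8_21;
     iso_inv := iso_inv_su21_to_L8_21 |}.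

Definition sl3R_to_L8_5 : certificate :=
  {| basis :=
      [:: [:: 0; 0; 0; 1; 0; 0; 0; 0];
          [:: 0; 0; 0; -1; 1; 0; 0; 0];
          [:: 0; 0; -1; 0; 0; 1; 0; 0];
          [:: 0; 1; 0; 0; 0; 0; 1; 0];
          [:: 0; 0; 1; 0; 0; 1; 0; 0];
          [:: -1; 0; 0; 0; 0; 0; 0; 1];
          [:: 0; -1; 0; 0; 0; 0; 1; 0];
          [:: 1; 0; 0; 0; 0; 0; 0; 1]];
     basis_inv :=
      [:: [:: 0; 0; 0; 0; 0; -1/2; 0; 1/2];
          [:: 0; 0; 0; 1/2; 0; 0; -1/2; 0];
          [:: 0; 0; -1/2; 0; 1/2; 0; 0; 0];
          [:: 1; 0; 0; 0; 0; 0; 0; 0];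
          [:: 1; 1; 0; 0; 0; 0; 0; 0];
          [:: 0; 0; 1/2; 0; 1/2; 0; 0; 0];
          [:: 0; 0; 0; 1/2; 0; 0; 1/2; 0];
          [:: 0; 0; 0; 0; 0; 1/2; 0; 1/2]];
     weights := [:: 0; 0; 0; 1; 1; 1; 1; 1];
     iso := iso_su3_to_L8_5;
     iso_inv := iso_inv_su3_to_L8_5 |}.

Definition basis_sl3R_to_L8_13_m1 : seq (seq rat) :=
  [:: [:: 1; 0; 0; 0; 0; 0; 0; 1];
      [:: -1; 0; 0; 0; 0; 0; 0; 1];
      [:: 0; 1; 0; 0; 0; 0; 0; 0];
      [:: 0; 0; 0; 1; 0; 0; 0; 0];
      [:: 0; 0; 1; 0; 0; 0; 0; 0];
      [:: 0; 0; 0; 0; 1; 0; 0; 0];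
      [:: 0; 0; 0; 0; 0; 1; 0; 0];
      [:: 0; 0; 0; 0; 0; 0; 1; 0]].

Definition basis_inv_sl3R_to_L8_13_m1 : seq (seq rat) :=
  [:: [:: 1/2; -1/2; 0; 0; 0; 0; 0; 0];
      [:: 0; 0; 1; 0; 0; 0; 0; 0];
      [:: 0; 0; 0; 0; 1; 0; 0; 0];
      [:: 0; 0; 0; 1; 0; 0; 0; 0];
      [:: 0; 0; 0; 0; 0; 1; 0; 0];
      [:: 0; 0; 0; 0; 0; 0; 1; 0];
      [:: 0; 0; 0; 0; 0; 0; 0; 1];
      [:: 1/2; 1/2; 0; 0; 0; 0; 0; 0]].

Definition sl3R_to_L8_13_m1 : certificate :=
  {| basis := basis_sl3R_to_L8_13_m1;
     basis_inv := basis_inv_sl3R_to_L8_13_m1;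
     weights := [:: 0; 0; 0; 1; 1; 1; 1; 2];
     iso :=
      [:: [:: 1; 0; 0; 0; 0; 0; 0; 0];
          [:: 0; 1; 0; 0; 0; 0; 0; 0];
          [:: 0; 0; 1; 0; 0; 0; 0; 0];
          [:: 0; 0; 0; 1; 0; 0; -1/2; 0];
          [:: 0; 0; 0; 0; 1; 1/2; 0; 0];
          [:: 0; 0; 0; 1; 0; 0; 1/2; 0];
          [:: 0; 0; 0; 0; 1; -1/2; 0; 0];
          [:: 0; 0; 0; 0; 0; 0; 0; 2]];
     iso_inv :=
      [:: [:: 1; 0; 0; 0; 0; 0; 0; 0];
          [:: 0; 1; 0; 0; 0; 0; 0; 0];
          [:: 0; 0; 1; 0; 0; 0; 0; 0];
          [:: 0; 0; 0; 1/2; 0; 1/2; 0; 0];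
          [:: 0; 0; 0; 0; 1/2; 0; 1/2; 0];
          [:: 0; 0; 0; 0; 1; 0; -1; 0];
          [:: 0; 0; 0; -1; 0; 1; 0; 0];
          [:: 0; 0; 0; 0; 0; 0; 0; 1/2]] |}.

Definition basis_sl3R_to_L8_14 : seq (seq rat) :=
  [:: [:: 1; 0; 0; 0; 0; 0; 0; 1];
      [:: -1; 0; 0; 0; 0; 0; 0; 1];
      [:: 0; 1; 0; 0; 0; 0; 0; 0];
      [:: 0; 0; 0; 3; 0; 1; 0; 0];
      [:: 0; 0; 1; 0; 0; 0; 0; 0];
      [:: 0; 0; 0; 0; 3; 0; 1; 0];
      [:: 0; 0; 0; 0; 3; 0; -1; 0];
      [:: 0; 0; 0; -3; 0; 1; 0; 0]].

Definition basis_inv_sl3R_to_L8_14 : seq (seq rat) :=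
  [:: [:: 1/2; -1/2; 0; 0; 0; 0; 0; 0];
      [:: 0; 0; 1; 0; 0; 0; 0; 0];
      [:: 0; 0; 0; 0; 1; 0; 0; 0];
      [:: 0; 0; 0; 1/6; 0; 0; 0; -1/6];
      [:: 0; 0; 0; 0; 0; 1/6; 1/6; 0];
      [:: 0; 0; 0; 1/2; 0; 0; 0; 1/2];
      [:: 0; 0; 0; 0; 0; 1/2; -1/2; 0];
      [:: 1/2; 1/2; 0; 0; 0; 0; 0; 0]].

Definition sl3R_to_L8_14 : certificate :=
  {| basis := basis_sl3R_to_L8_14;
     basis_inv := basis_inv_sl3R_to_L8_14;
     weights := [:: 0; 0; 0; 2; 2; 1; 1; 1];
     iso := neg_last_coord;
     iso_inv := neg_last_coord |}.

Definition sl3R_to_L8_15 : certificate :=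
  {| basis := basis_sl3R_to_L8_14;
     basis_inv := basis_inv_sl3R_to_L8_14;
     weights := [:: 0; 0; 0; 3; 3; 1; 1; 2];
     iso := neg_last_coord;
     iso_inv := neg_last_coord |}.

Definition sl3R_to_L8_17_m1 : certificate :=
  {| basis := basis_sl3R_to_L8_13_m1;
     basis_inv := basis_inv_sl3R_to_L8_13_m1;
     weights := [:: 0; 0; 0; 1; 1; 1; 1; 0];
     iso :=
      [:: [:: 1; 0; 0; 0; 0; 0; 0; 0];
          [:: 0; 1; 0; 0; 0; 0; 0; 0];
          [:: 0; 0; 1; 0; 0; 0; 0; 0];
          [:: 0; 0; 0; 0; 0; 0; -1; 0];
          [:: 0; 0; 0; 0; 0; 1; 0; 0];
          [:: 0; 0; 0; 1; 0; 0; 0; 0];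
          [:: 0; 0; 0; 0; 1; 0; 0; 0];
          [:: 0; 0; 0; 0; 0; 0; 0; 3]];
     iso_inv :=
      [:: [:: 1; 0; 0; 0; 0; 0; 0; 0];
          [:: 0; 1; 0; 0; 0; 0; 0; 0];
          [:: 0; 0; 1; 0; 0; 0; 0; 0];
          [:: 0; 0; 0; 0; 0; 1; 0; 0];
          [:: 0; 0; 0; 0; 0; 0; 1; 0];
          [:: 0; 0; 0; 0; 1; 0; 0; 0];
          [:: 0; 0; 0; -1; 0; 0; 0; 0];
          [:: 0; 0; 0; 0; 0; 0; 0; 1/3]] |}.

Definition sl3R_to_L8_21 : certificate :=
  {| basis :=
      [:: [:: 2; 0; 0; 0; 0; 4; 0; 0];
          [:: 0; 0; 0; 0; 0; -8; 0; 0];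
          [:: 0; 1; 0; 0; -2; 0; 0; 0];
          [:: 0; 0; 0; 1; 0; 0; 0; 0];
          [:: 0; 0; 2; 0; 0; 0; 24; 0];
          [:: 0; 1; 0; 0; 2; 0; 0; 0];
          [:: 0; 0; 0; 0; 0; 0; 0; 96];
          [:: 0; 0; 2; 0; 0; 0; -24; 0]];
     basis_inv :=
      [:: [:: 1/2; 1/4; 0; 0; 0; 0; 0; 0];
          [:: 0; 0; 1/2; 0; 0; 1/2; 0; 0];
          [:: 0; 0; 0; 0; 1/4; 0; 0; 1/4];
          [:: 0; 0; 0; 1; 0; 0; 0; 0];
          [:: 0; 0; -1/4; 0; 0; 1/4; 0; 0];
          [:: 0; -1/8; 0; 0; 0; 0; 0; 0];
          [:: 0; 0; 0; 0; 1/48; 0; 0; -1/48];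
          [:: 0; 0; 0; 0; 0; 0; 1/96; 0]];
     weights := [:: 0; 0; 0; 1; 1; 1; 1; 1];
     iso := iso_su21_to_L8_21;
     iso_inv := iso_inv_su21_to_L8_21 |}.

Theorem theorem2 (R : realType) :
  (* (i) su(3) *)
  (su3_contracts_onto (@L8_2 R) /\ su3_contracts_onto (@L8_4_0 R) /\
   su3_contracts_onto (@L8_5 R)) /\
  (* (ii) su(2,1) *)
  (su21_contracts_onto (@L8_2 R) /\ su21_contracts_onto (@L8_4_0 R) /\
   su21_contracts_onto (@L8_13 R 1) /\ su21_contracts_onto (@L8_14 R) /\
   su21_contracts_onto (@L8_15 R) /\ su21_contracts_onto (@L8_18_0 R) /\
   su21_contracts_onto (@L8_21 R)) /\
  (* (iii) sl(3,R) *)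
  (sl3R_contracts_onto (@L8_5 R) /\ sl3R_contracts_onto (@L8_13 R (-1)) /\
   sl3R_contracts_onto (@L8_14 R) /\ sl3R_contracts_onto (@L8_15 R) /\
   sl3R_contracts_onto (@L8_17_m1 R) /\ sl3R_contracts_onto (@L8_21 R)).
Proof.
rewrite -(rmorphN1 (@ratr R)) -(rmorph1 (@ratr R)) !L8_13_ratr.
rewrite L8_2_ratr L8_4_0_ratr L8_5_ratr L8_14_ratr L8_15_ratr L8_17_m1_ratr L8_18_0_ratr.
rewrite L8_21_ratr.
do !split.
- by apply: (su3_certified R (C := su3_to_L8_2)); vm_compute.
- by apply: (su3_certified R (C := su3_to_L8_4_0)); vm_compute.
- by apply: (su3_certified R (C := su3_to_L8_5)); vm_compute.
- by apply: (su21_certified R (C := su21_to_L8_2)); vm_compute.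
- by apply: (su21_certified R (C := su21_to_L8_4_0)); vm_compute.
- by apply: (su21_certified R (C := su21_to_L8_13)); vm_compute.
- by apply: (su21_certified R (C := su21_to_L8_14)); vm_compute.
- by apply: (su21_certified R (C := su21_to_L8_15)); vm_compute.
- by apply: (su21_certified R (C := su21_to_L8_18_0)); vm_compute.
- by apply: (su21_certified R (C := su21_to_L8_21)); vm_compute.
- by apply: (sl3R_certified R (C := sl3R_to_L8_5)); vm_compute.
- by apply: (sl3R_certified R (C := sl3R_to_L8_13_m1)); vm_compute.
- by apply: (sl3R_certified R (C := sl3R_to_L8_14)); vm_compute.
- by apply: (sl3R_certified R (C := sl3R_to_L8_15)); vm_compute.
- by apply: (sl3R_certified R (C := sl3R_to_L8_17_m1)); vm_compute.
- by apply: (sl3R_certified R (C := sl3R_to_L8_21)); vm_compute.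
Qed.
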